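(* In the location game $\mathcal L(n,\mathcal C)$ on the circle of radius $1$, for every $n\ge1$: (a) $\operatorname{PoA}(n)=2$ if $n$ is even, and $\operatorname{PoA}(n)=\dfrac{2n}{n+1}$ if $n$ is odd; (b) $\operatorname{PoS}(n)=1$.
   Context: Location game $\mathcal L(n,\mathcal C)$ on the circle $\mathcal C$ of radius $1$ (circumference $2\pi$), with arc-length measure $\lambda$ and arc distance $d$. There are $n$ players, each choosing a point of $\mathcal C$. Consumers are distributed according to $\lambda$, and each shops at a closest occupied location. Consumers equidistant from several closest occupied locations are split equally among those locations, and the share of a location is split equally among the players located there. Payoff is the mass of consumers attracted. Nash equilibria are pure. Social cost: \[ C(\boldsymbol x)=\int_{\mathcal C}\min_i d(x_i,y)\,d\lambda(y). \] With $\mathcal E_n$ the set of pure Nash equilibria, \[ \operatorname{PoA}(n)=\frac{\sup_{\boldsymbol x\in\mathcal E_n}C(\boldsymbol x)}{\inf_{\boldsymbol x\in\mathcal C^n}C(\boldsymbol x)}, \qquad \operatorname{PoS}(n)=\frac{\inf_{\boldsymbol x\in\mathcal E_n}C(\boldsymbol x)}{\inf_{\boldsymbol x\in\mathcal C^n}C(\boldsymbol x)}. \] *)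

From Stdlib Require Import Reals Lra ClassicalEpsilon.
Open Scope R_scope.

(** Total Riemann integral on [a,b]: the (proof-independent) value RiemannInt
    when f is Riemann integrable, and 0 otherwise. *)
Definition Rint (f : R -> R) (a b : R) : R :=
  match excluded_middle_informative
          (exists v, exists pr : Riemann_integrable f a b, RiemannInt pr = v) with
  | left H => proj1_sig (constructive_indefinite_description _ H)
  | right _ => 0
  end.

(** Points of the unit circle are represented by their angle in [0, 2*PI). *)
Definition on_circle (a : R) : Prop := 0 <= a < 2 * PI.

Definition arcd (a b : R) : R := Rmin (Rabs (a - b)) (2 * PI - Rabs (a - b)).

(** A strategy profile: player j (j < n) is located at angle x j. *)
Definition profile := nat -> R.

Definition valid (n : nat) (x : profile) : Prop := forall j, (j < n)%nat -> on_circle (x j).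

(** min_{j<n} d(x_j, y)  (meaningful for n >= 1). *)
Fixpoint mind (x : profile) (n : nat) (y : R) : R :=
  match n with
  | O => 0
  | S O => arcd (x O) y
  | S m => Rmin (mind x m y) (arcd (x m) y)
  end.

Fixpoint sumR (n : nat) (f : nat -> R) : R :=
  match n with O => 0 | S m => sumR m f + f m end.

Definition ind (b : bool) : R := if b then 1 else 0.
Definition Reqb (a b : R) : bool := if Req_EM_T a b then true else false.

Definition closest (x : profile) (n : nat) (y : R) (j : nat) : bool :=
  Reqb (arcd (x j) y) (mind x n y).

(** j is the first (smallest-index) player at its location *)
Definition first_at (x : profile) (j : nat) : bool :=
  Reqb (sumR j (fun k => ind (Reqb (x k) (x j)))) 0.

(** number of distinct closest occupied locations to y *)
Definition nclosest_locs (x : profile) (n : nat) (y : R) : R :=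
  sumR n (fun j => ind (closest x n y j && first_at x j)).

Definition nplayers_at (x : profile) (n : nat) (p : R) : R :=
  sumR n (fun j => ind (Reqb (x j) p)).

(** share of consumer y obtained by player i: consumers are split equally
    among the closest occupied locations, and a location's share equally
    among the players located there. *)
Definition share (x : profile) (n : nat) (i : nat) (y : R) : R :=
  if closest x n y i then / (nclosest_locs x n y * nplayers_at x n (x i)) else 0.

Definition payoff (x : profile) (n : nat) (i : nat) : R :=
  Rint (share x n i) 0 (2 * PI).

Definition social_cost (x : profile) (n : nat) : R :=
  Rint (mind x n) 0 (2 * PI).

Definition upd (x : profile) (i : nat) (p : R) : profile :=
  fun j => if Nat.eqb j i then p else x j.

Definition is_NE (n : nat) (x : profile) : Prop :=
  valid n x /\
  forall i, (i < n)%nat -> forall p, on_circle p ->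
    payoff (upd x i p) n i <= payoff x n i.

Definition is_lower_bound (E : R -> Prop) (m : R) : Prop := forall c, E c -> m <= c.
Definition is_glb (E : R -> Prop) (m : R) : Prop :=
  is_lower_bound E m /\ forall b, is_lower_bound E b -> b <= m.

Definition all_costs (n : nat) : R -> Prop :=
  fun c => exists x, valid n x /\ c = social_cost x n.
Definition NE_costs (n : nat) : R -> Prop :=
  fun c => exists x, is_NE n x /\ c = social_cost x n.

(* Outside finitely many points, each consumer belongs to the Voronoi cell of exactly one occupied
   location z, and that cell reaches half way to the neighbouring location on each side. If
   [r z] and [l z] are the gaps to these neighbours and [q z] players share [z], the payoff of
   each of them is (r z + l z) / (2 q z) and the social cost is the sum of (r z^2 + l z^2) / 8
   over the distinct locations, while the gaps add up to 2 PI.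

   The cost is therefore at least PI^2 / n (Cauchy-Schwarz), with equality for n equally spaced
   players, which form an equilibrium: PoS = 1. In an equilibrium with largest gap M, a player
   may move to the middle of that gap and earn M / 2, hence q z * M <= r z + l z; summing gives
   n M <= 4 PI, and for odd n pairing the locations along the circle improves this to
   (n + 1) M <= 4 PI. As every gap is at most M, the cost is at most M PI / 2, and players
   placed in equally spaced pairs (plus a single one for odd n) attain these bounds. *)

From Coquelicot Require Import Coquelicot.
From Stdlib Require Import Reals Lra Lia List Bool Classical ClassicalEpsilon Sorting.Sorted.
(* [Defs] comes last because Coquelicot also exports an [ind]. *)
From Pilot Require Import Defs.
Open Scope R_scope.

Lemma Rint_of_is_RInt (f : R -> R) (a b v : R) : is_RInt f a b v -> Rint f a b = v.
Proof.
  intros Hi. unfold Rint.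
  destruct excluded_middle_informative as [H|H].
  - destruct constructive_indefinite_description as [w [pr Hpr]]; simpl.
    rewrite <- Hpr, <- RInt_Reals. now apply is_RInt_unique.
  - exfalso; apply H. exists v, (ex_RInt_Reals_0 f a b (ex_intro _ v Hi)).
    rewrite <- RInt_Reals; now apply is_RInt_unique.
Qed.

Lemma is_RInt_constR (a b c : R) : is_RInt (fun _ => c) a b ((b - a) * c).
Proof. apply (@is_RInt_const R_NormedModule). Qed.

Lemma is_RInt_scalR (a b c v : R) (f : R -> R) :
  is_RInt f a b v -> is_RInt (fun y => c * f y) a b (c * v).
Proof. apply (@is_RInt_scal R_NormedModule). Qed.

Lemma is_RInt_ChaslesR (f : R -> R) (a b c v1 v2 : R) :
  is_RInt f a b v1 -> is_RInt f b c v2 -> is_RInt f a c (v1 + v2).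
Proof. apply (@is_RInt_Chasles R_NormedModule). Qed.

Lemma is_RInt_uniqueR (f : R -> R) (a b v w : R) : is_RInt f a b v -> is_RInt f a b w -> v = w.
Proof.
  intros H1 H2. apply (@is_RInt_unique R_CompleteNormedModule) in H1, H2. congruence.
Qed.

Lemma is_RInt_splitR (f : R -> R) (a b c v : R) : a <= b <= c -> is_RInt f a c v ->
  exists v1 v2, is_RInt f a b v1 /\ is_RInt f b c v2 /\ v = v1 + v2.
Proof.
  intros Hb Hf.
  destruct (@ex_RInt_Chasles_1 R_CompleteNormedModule f a b c Hb (ex_intro _ v Hf)) as [v1 H1].
  destruct (@ex_RInt_Chasles_2 R_CompleteNormedModule f a b c Hb (ex_intro _ v Hf)) as [v2 H2].
  exists v1, v2. split; [|split]; auto.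
  apply (is_RInt_uniqueR f a c); auto. now apply (is_RInt_ChaslesR f a b c).
Qed.

Lemma is_RInt_sumR (a b : R) (f : nat -> R -> R) (v : nat -> R) m :
  (forall j, (j < m)%nat -> is_RInt (f j) a b (v j)) ->
  is_RInt (fun y => sumR m (fun j => f j y)) a b (sumR m v).
Proof.
  induction m; intros H; simpl.
  - pose proof (is_RInt_constR a b 0) as H0. rewrite Rmult_0_r in H0. exact H0.
  - apply (@is_RInt_plus R_NormedModule (fun y => sumR m (fun j => f j y)) (f m)).
    + apply IHm; intros; apply H; lia.
    + apply H; lia.
Qed.

Lemma is_RInt_ext_open (f g : R -> R) (a b v : R) : a <= b ->
  (forall y, a < y < b -> f y = g y) -> is_RInt g a b v -> is_RInt f a b v.
Proof.
  intros Hab H. apply is_RInt_ext. intros y Hy.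
  rewrite Rmin_left, Rmax_right in Hy by lra. symmetry; apply H; auto.
Qed.

Lemma is_RInt_ext_but_point (f g : R -> R) (a b v e : R) : a <= b ->
  (forall y, a < y < b -> y <> e -> f y = g y) -> is_RInt g a b v -> is_RInt f a b v.
Proof.
  intros Hab Hfg Hg.
  destruct (Rlt_dec a e) as [H1|H1]; [destruct (Rlt_dec e b) as [H2|H2]|].
  - destruct (is_RInt_splitR g a e b v ltac:(lra) Hg) as [v1 [v2 [G1 [G2 ->]]]].
    apply (is_RInt_ChaslesR f a e b).
    + apply (is_RInt_ext_open f g); [lra| |exact G1]. intros y Hy; apply Hfg; lra.
    + apply (is_RInt_ext_open f g); [lra| |exact G2]. intros y Hy; apply Hfg; lra.
  - apply (is_RInt_ext_open f g a b v Hab); [|exact Hg]. intros y Hy; apply Hfg; lra.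
  - apply (is_RInt_ext_open f g a b v Hab); [|exact Hg]. intros y Hy; apply Hfg; lra.
Qed.

Lemma is_RInt_ext_but_finite (L : list R) (f g : R -> R) (a b v : R) : a <= b ->
  (forall y, a < y < b -> ~ In y L -> f y = g y) -> is_RInt g a b v -> is_RInt f a b v.
Proof.
  revert f. induction L as [|e L IH]; intros f Hab Hfg Hg.
  - apply (is_RInt_ext_open f g a b v Hab); [|exact Hg]. intros y Hy; apply Hfg; auto.
  - set (h := fun y => if Req_EM_T y e then g y else f y).
    apply (is_RInt_ext_but_point f h a b v e Hab).
    + intros y _ Hne. unfold h. destruct Req_EM_T; tauto.
    + apply IH; [exact Hab| |exact Hg]. intros y Hy Hn. unfold h.
      destruct Req_EM_T; auto. apply Hfg; auto. simpl; intros [He|He]; [congruence|tauto].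
Qed.

Lemma is_RInt_id (a b : R) : is_RInt (fun t => t) a b ((b * b - a * a) / 2).
Proof.
  replace ((b * b - a * a) / 2) with (minus (b * b / 2) (a * a / 2))
    by (unfold minus, plus, opp; simpl; lra).
  apply (@is_RInt_derive R_CompleteNormedModule (fun t => t * t / 2)).
  - intros t _. auto_derive; auto. lra.
  - intros t _. apply continuous_id.
Qed.

Lemma is_RInt_2PI_minus (a b : R) :
  is_RInt (fun t => 2 * PI - t) a b (2 * PI * (b - a) - (b * b - a * a) / 2).
Proof.
  replace (2 * PI * (b - a) - (b * b - a * a) / 2)
    with (minus (2 * PI * b - b * b / 2) (2 * PI * a - a * a / 2))
    by (unfold minus, plus, opp; simpl; lra).
  apply (@is_RInt_derive R_CompleteNormedModule (fun t => 2 * PI * t - t * t / 2)).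
  - intros t _. auto_derive; auto. lra.
  - intros t _. apply (continuous_minus (fun _ => 2 * PI) (fun t => t)).
    + apply continuous_const.
    + apply continuous_id.
Qed.

Definition ccw (a b : R) : R := if Rle_dec a b then b - a else b - a + 2 * PI.

Lemma ccw_range a b : on_circle a -> on_circle b -> 0 <= ccw a b < 2 * PI.
Proof. unfold on_circle, ccw; intros; destruct Rle_dec; lra. Qed.

Lemma ccw_refl a : ccw a a = 0.
Proof. unfold ccw; destruct Rle_dec; lra. Qed.

Lemma ccw_eq0 a b : on_circle a -> on_circle b -> ccw a b = 0 -> a = b.
Proof. unfold on_circle, ccw; intros; destruct Rle_dec; lra. Qed.

Lemma ccw_gt0 a b : on_circle a -> on_circle b -> a <> b -> 0 < ccw a b.
Proof.
  intros Ha Hb Hn. destruct (ccw_range a b Ha Hb).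
  destruct (Req_dec (ccw a b) 0); [|lra]. exfalso; apply Hn; now apply ccw_eq0.
Qed.

Lemma ccw_sym a b : on_circle a -> on_circle b -> a <> b -> ccw b a = 2 * PI - ccw a b.
Proof. unfold on_circle, ccw; intros; destruct Rle_dec; destruct Rle_dec; lra. Qed.

Lemma ccw_sub_l a b c : on_circle a -> on_circle b -> on_circle c ->
  ccw a b <= ccw a c -> ccw b c = ccw a c - ccw a b.
Proof. unfold on_circle, ccw; intros; repeat destruct Rle_dec; lra. Qed.

Lemma ccw_sub_r a b c : on_circle a -> on_circle b -> on_circle c ->
  ccw b c <= ccw a c -> ccw a b = ccw a c - ccw b c.
Proof. unfold on_circle, ccw; intros; repeat destruct Rle_dec; lra. Qed.

Lemma ccw_add a b c : on_circle a -> on_circle b -> on_circle c ->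
  ccw a b + ccw b c < 2 * PI -> ccw a c = ccw a b + ccw b c.
Proof. unfold on_circle, ccw; intros; repeat destruct Rle_dec; lra. Qed.

Lemma ccw_inj v a b : on_circle v -> on_circle a -> on_circle b -> ccw v a = ccw v b -> a = b.
Proof. intros Hv Ha Hb E. apply ccw_eq0; auto. rewrite (ccw_sub_l v a b); auto; lra. Qed.

Lemma arcd_ccw a b : on_circle a -> on_circle b -> arcd a b = Rmin (ccw a b) (ccw b a).
Proof.
  unfold on_circle, arcd, ccw; intros.
  destruct (Rle_dec a b); destruct (Rle_dec b a).
  - assert (a = b) by lra; subst. replace (b - b) with 0 by lra. rewrite Rabs_R0.
    unfold Rmin; repeat destruct Rle_dec; lra.
  - rewrite Rabs_left1 by lra. unfold Rmin; repeat destruct Rle_dec; lra.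
  - rewrite Rabs_pos_eq by lra. unfold Rmin; repeat destruct Rle_dec; lra.
  - lra.
Qed.

Lemma arcd_le_ccw a b : on_circle a -> on_circle b -> arcd a b <= ccw a b.
Proof. intros; rewrite arcd_ccw by auto; apply Rmin_l. Qed.

Lemma arcd_le_ccw_rev a b : on_circle a -> on_circle b -> arcd a b <= ccw b a.
Proof. intros; rewrite arcd_ccw by auto; apply Rmin_r. Qed.

Lemma arcd_gt a b d : on_circle a -> on_circle b -> d < ccw a b -> d < ccw b a -> d < arcd a b.
Proof. intros; rewrite arcd_ccw by auto; unfold Rmin; destruct Rle_dec; lra. Qed.

(** [wrap (z + d)] and [wrap_neg (z - d)] are the points at arc length [d] from [z],
    counterclockwise and clockwise. *)
Definition wrap (t : R) : R := if Rlt_dec t (2 * PI) then t else t - 2 * PI.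
Definition wrap_neg (t : R) : R := if Rle_dec 0 t then t else t + 2 * PI.

Lemma wrap_ccw z d : on_circle z -> 0 <= d < 2 * PI ->
  on_circle (wrap (z + d)) /\ ccw z (wrap (z + d)) = d.
Proof. unfold on_circle, wrap, ccw; intros; destruct Rlt_dec; destruct Rle_dec; split; lra. Qed.

Lemma ccw_wrap z y d : on_circle z -> on_circle y -> ccw z y = d -> y = wrap (z + d).
Proof. unfold on_circle, ccw, wrap; intros; subst; repeat destruct Rle_dec; repeat destruct Rlt_dec; lra. Qed.

Lemma ccw_wrap_neg z y d : on_circle z -> on_circle y -> ccw y z = d -> y = wrap_neg (z - d).
Proof. unfold on_circle, ccw, wrap_neg; intros; subst; repeat destruct Rle_dec; lra. Qed.

Lemma is_RInt_rotate (G : R -> R) (z v : R) : on_circle z -> is_RInt G 0 (2 * PI) v ->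
  is_RInt (fun y => G (ccw z y)) 0 (2 * PI) v.
Proof.
  intros Hz HG. unfold on_circle in Hz.
  destruct (is_RInt_splitR G 0 (2 * PI - z) (2 * PI) v ltac:(lra) HG) as [v1 [v2 [E1 [E2 ->]]]].
  rewrite Rplus_comm. apply (is_RInt_ChaslesR _ 0 z (2 * PI) v2 v1).
  - apply (is_RInt_ext_open _ (fun y => scal 1 (G (1 * y + (2 * PI - z))))); [lra| |].
    + intros y Hy. unfold scal; simpl; unfold mult; simpl. rewrite Rmult_1_l.
      unfold ccw; destruct Rle_dec; [lra|]. f_equal; lra.
    + apply (@is_RInt_comp_lin R_NormedModule).
      replace (1 * 0 + (2 * PI - z)) with (2 * PI - z) by lra.
      replace (1 * z + (2 * PI - z)) with (2 * PI) by lra. exact E2.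
  - apply (is_RInt_ext_open _ (fun y => scal 1 (G (1 * y + - z)))); [lra| |].
    + intros y Hy. unfold scal; simpl; unfold mult; simpl. rewrite Rmult_1_l.
      unfold ccw; destruct Rle_dec; [|lra]. f_equal; lra.
    + apply (@is_RInt_comp_lin R_NormedModule).
      replace (1 * z + - z) with 0 by lra.
      replace (1 * (2 * PI) + - z) with (2 * PI - z) by lra. exact E1.
Qed.

Lemma Reqb_true a b : Reqb a b = true <-> a = b.
Proof. unfold Reqb; destruct Req_EM_T; split; intros; congruence. Qed.

Lemma Reqb_false a b : Reqb a b = false <-> a <> b.
Proof. unfold Reqb; destruct Req_EM_T; split; intros; congruence. Qed.

Lemma Reqb_refl a : Reqb a a = true.
Proof. now apply Reqb_true. Qed.

Lemma ind_range b : 0 <= ind b <= 1.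
Proof. destruct b; simpl; lra. Qed.

Lemma sumR_ext n f g : (forall k, (k < n)%nat -> f k = g k) -> sumR n f = sumR n g.
Proof.
  induction n; simpl; intros H; auto.
  rewrite IHn by (intros; apply H; lia). rewrite H by lia; auto.
Qed.

Lemma sumR_plus n f g : sumR n (fun k => f k + g k) = sumR n f + sumR n g.
Proof. induction n; simpl; [lra|]. rewrite IHn; lra. Qed.

Lemma sumR_scal n c f : sumR n (fun k => c * f k) = c * sumR n f.
Proof. induction n; simpl; [lra|]. rewrite IHn; lra. Qed.

Lemma sumR_le n f g : (forall k, (k < n)%nat -> f k <= g k) -> sumR n f <= sumR n g.
Proof.
  induction n; simpl; intros H; [lra|].
  assert (sumR n f <= sumR n g) by (apply IHn; intros; apply H; lia).
  specialize (H n (Nat.lt_succ_diag_r n)). lra.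
Qed.

Lemma sumR_const n c : sumR n (fun _ => c) = INR n * c.
Proof. induction n; simpl sumR; [simpl; lra|]. rewrite IHn, S_INR; lra. Qed.

Lemma sumR_zero n f : (forall k, (k < n)%nat -> f k = 0) -> sumR n f = 0.
Proof. intros H. rewrite (sumR_ext n f (fun _ => 0)) by auto. rewrite sumR_const; lra. Qed.

Lemma sumR_swap n m (f : nat -> nat -> R) :
  sumR n (fun j => sumR m (fun k => f j k)) = sumR m (fun k => sumR n (fun j => f j k)).
Proof.
  induction n; simpl.
  - symmetry; apply sumR_zero; auto.
  - rewrite IHn, <- sumR_plus. reflexivity.
Qed.

Lemma sumR_nonneg n f : (forall k, (k < n)%nat -> 0 <= f k) -> 0 <= sumR n f.
Proof.
  intros H. rewrite <- (sumR_zero n (fun _ => 0)) by auto. now apply sumR_le.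
Qed.

Lemma sumR_ge_term n f k : (forall j, (j < n)%nat -> 0 <= f j) -> (k < n)%nat -> f k <= sumR n f.
Proof.
  induction n; intros H Hk; simpl; [lia|].
  assert (0 <= sumR n f) by (apply sumR_nonneg; intros; apply H; lia).
  assert (0 <= f n) by (apply H; lia).
  destruct (Nat.eq_dec k n) as [->|Hkn]; [lra|].
  assert (f k <= sumR n f) by (apply IHn; [intros; apply H|]; lia). lra.
Qed.

Lemma sumR_ge_two_terms n f k1 k2 : (forall j, (j < n)%nat -> 0 <= f j) ->
  (k1 < n)%nat -> (k2 < n)%nat -> k1 <> k2 -> f k1 + f k2 <= sumR n f.
Proof.
  induction n; intros H Hk1 Hk2 Hne; simpl; [lia|].
  assert (Hf : forall j, (j < n)%nat -> 0 <= f j) by (intros; apply H; lia).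
  assert (0 <= f n) by (apply H; lia).
  destruct (Nat.eq_dec k1 n); [|destruct (Nat.eq_dec k2 n)]; subst.
  - assert (f k2 <= sumR n f) by (apply sumR_ge_term; auto; lia). lra.
  - assert (f k1 <= sumR n f) by (apply sumR_ge_term; auto; lia). lra.
  - assert (f k1 + f k2 <= sumR n f) by (apply IHn; auto; lia). lra.
Qed.

Lemma sumR_ind_zero n b :
  sumR n (fun k => ind (b k)) = 0 <-> forall k, (k < n)%nat -> b k = false.
Proof.
  induction n; simpl; split; intros H.
  - intros; lia.
  - auto.
  - assert (0 <= sumR n (fun k => ind (b k))) by (apply sumR_nonneg; intros; apply ind_range).
    destruct (b n) eqn:Eb; simpl in H; [lra|].
    intros k Hk. destruct (Nat.eq_dec k n); [subst; auto|]. apply IHn; [lra|lia].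
  - rewrite (proj2 IHn) by (intros; apply H; lia). rewrite H by lia. simpl; lra.
Qed.

Lemma sumR_ind_INR n (b : nat -> bool) : exists m : nat, sumR n (fun j => ind (b j)) = INR m.
Proof.
  induction n; simpl.
  - exists 0%nat; auto.
  - destruct IHn as [m ->]. destruct (b n); simpl.
    + exists (S m). rewrite S_INR; lra.
    + exists m; lra.
Qed.

Lemma sumR_delta_le n c : sumR n (fun j => ind (Nat.eqb j c)) <= 1.
Proof.
  induction n; simpl; [lra|]. destruct (Nat.eq_dec n c) as [->|Hnc].
  - rewrite Nat.eqb_refl, sumR_zero; simpl; [lra|].
    intros k Hk. rewrite (proj2 (Nat.eqb_neq k c)) by lia; auto.
  - rewrite (proj2 (Nat.eqb_neq n c)) by auto. simpl; lra.
Qed.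

Lemma sumR_delta n i : (i < n)%nat -> sumR n (fun j => ind (Nat.eqb j i)) = 1.
Proof.
  intros Hi. apply Rle_antisym; [apply sumR_delta_le|].
  replace 1 with (ind (Nat.eqb i i)) by (rewrite Nat.eqb_refl; auto).
  apply (sumR_ge_term n (fun j => ind (Nat.eqb j i))); auto. intros; apply ind_range.
Qed.

Lemma nplayers_ge1 x n p i : (i < n)%nat -> x i = p -> 1 <= nplayers_at x n p.
Proof.
  intros Hi Hp. unfold nplayers_at. replace 1 with (ind (Reqb (x i) p)).
  - apply (sumR_ge_term n (fun j => ind (Reqb (x j) p))); auto. intros; apply ind_range.
  - rewrite Hp, Reqb_refl; auto.
Qed.

Lemma nplayers_ge2 x n p i k : (i < n)%nat -> (k < n)%nat -> i <> k -> x i = p -> x k = p ->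
  2 <= nplayers_at x n p.
Proof.
  intros Hi Hk Hik Hp Hq. unfold nplayers_at.
  pose proof (sumR_ge_two_terms n (fun j => ind (Reqb (x j) p)) i k
               ltac:(intros; apply ind_range) Hi Hk Hik) as H.
  simpl in H. rewrite Hp, Hq, Reqb_refl in H. simpl in H. lra.
Qed.

Lemma nplayers_alone x n i : (i < n)%nat -> (forall k, (k < n)%nat -> k <> i -> x k <> x i) ->
  nplayers_at x n (x i) = 1.
Proof.
  intros Hi Halone. unfold nplayers_at. rewrite <- (sumR_delta n i Hi).
  apply sumR_ext; intros k Hk. destruct (Nat.eq_dec k i) as [->|Hki].
  - rewrite Reqb_refl, Nat.eqb_refl; auto.
  - rewrite (proj2 (Nat.eqb_neq k i)) by auto. rewrite (proj2 (Reqb_false _ _)); auto.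
Qed.

Lemma nplayers_le2_cases x n p i : (i < n)%nat -> x i = p -> nplayers_at x n p <= 2 ->
  nplayers_at x n p = 1 \/ nplayers_at x n p = 2.
Proof.
  intros Hi Hp H2. pose proof (nplayers_ge1 x n p i Hi Hp) as H1. unfold nplayers_at in *.
  destruct (sumR_ind_INR n (fun j => Reqb (x j) p)) as [m E]. rewrite E in *.
  assert (1 <= m)%nat by (apply INR_le; simpl; lra).
  assert (m <= 2)%nat by (apply INR_le; simpl; lra).
  assert (m = 1 \/ m = 2)%nat as [->| ->] by lia; simpl; [left|right]; lra.
Qed.

Lemma mind_spec x n y : (1 <= n)%nat ->
  (forall j, (j < n)%nat -> mind x n y <= arcd (x j) y) /\
  exists j, (j < n)%nat /\ mind x n y = arcd (x j) y.
Proof.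
  induction n as [|m IH]; intros Hn; [lia|].
  destruct m as [|m'].
  - simpl. split.
    + intros j Hj. assert (j = 0%nat) by lia; subst; lra.
    + exists 0%nat; split; auto.
  - change (mind x (S (S m')) y) with (Rmin (mind x (S m') y) (arcd (x (S m')) y)).
    destruct (IH ltac:(lia)) as [H1 [j [Hj Hj2]]]. split.
    + intros k Hk. destruct (Nat.eq_dec k (S m')) as [->|Hk'].
      * apply Rmin_r.
      * eapply Rle_trans; [apply Rmin_l|apply H1; lia].
    + unfold Rmin; destruct Rle_dec.
      * exists j; split; auto.
      * exists (S m'); split; auto.
Qed.

Lemma first_at_iff x j : first_at x j = true <-> forall k, (k < j)%nat -> x k <> x j.
Proof.
  unfold first_at. rewrite Reqb_true, sumR_ind_zero.
  split; intros H k Hk; specialize (H k Hk); now apply Reqb_false.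
Qed.

Lemma count_first_at_absent x n c : (forall k, (k < n)%nat -> x k <> c) ->
  sumR n (fun j => ind (Reqb (x j) c && first_at x j)) = 0.
Proof.
  intros H. apply sumR_zero. intros k Hk.
  rewrite (proj2 (Reqb_false (x k) c)) by auto. reflexivity.
Qed.

Lemma count_first_at_present x n c : (exists k, (k < n)%nat /\ x k = c) ->
  sumR n (fun j => ind (Reqb (x j) c && first_at x j)) = 1.
Proof.
  induction n; intros [k [Hk Hc]]; [lia|]. simpl.
  destruct (classic (exists k, (k < n)%nat /\ x k = c)) as [He|He].
  - rewrite IHn by auto. destruct (Reqb (x n) c) eqn:E; simpl; [|lra].
    apply Reqb_true in E. destruct He as [k' [Hk' Ek']].
    assert (first_at x n = false) as ->.
    { destruct (first_at x n) eqn:F; auto. apply first_at_iff with (k := k') in F; auto.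
      congruence. }
    simpl; lra.
  - assert (k = n) as -> by (destruct (Nat.eq_dec k n); auto; exfalso; apply He; exists k; split; auto; lia).
    rewrite count_first_at_absent by (intros k' Hk' E; apply He; eauto).
    rewrite (proj2 (Reqb_true (x n) c)) by auto.
    assert (first_at x n = true) as ->.
    { apply first_at_iff; intros k' Hk' E; apply He; exists k'; split; auto; congruence. }
    simpl; lra.
Qed.

Lemma sum_first_at_nplayers x n :
  sumR n (fun j => ind (first_at x j) * nplayers_at x n (x j)) = INR n.
Proof.
  unfold nplayers_at.
  transitivity (sumR n (fun j => sumR n (fun k => ind (Reqb (x k) (x j) && first_at x j)))).
  { apply sumR_ext; intros j Hj. rewrite <- sumR_scal. apply sumR_ext; intros k Hk.
    destruct (first_at x j), (Reqb (x k) (x j)); simpl; lra. }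
  rewrite sumR_swap, <- (Rmult_1_r (INR n)), <- sumR_const.
  apply sumR_ext; intros k Hk.
  rewrite <- (count_first_at_present x n (x k)) by eauto. apply sumR_ext; intros j Hj.
  destruct (Req_dec (x j) (x k)) as [E|E].
  - rewrite E, Reqb_refl. reflexivity.
  - rewrite (proj2 (Reqb_false _ _) E), (proj2 (Reqb_false _ _) (not_eq_sym E)). reflexivity.
Qed.

Fixpoint min_over (P : nat -> bool) (h : nat -> R) (n : nat) : R :=
  match n with
  | O => 2 * PI
  | S k => if P k then Rmin (min_over P h k) (h k) else min_over P h k
  end.

Lemma min_over_le P h n k : (k < n)%nat -> P k = true -> min_over P h n <= h k.
Proof.
  induction n; simpl; intros Hk Hp; [lia|].
  destruct (Nat.eq_dec k n) as [->|Hkn].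
  - rewrite Hp. apply Rmin_r.
  - assert (min_over P h n <= h k) by (apply IHn; auto; lia).
    destruct (P n); auto. eapply Rle_trans; [apply Rmin_l|auto].
Qed.

Lemma min_over_le_2PI P h n : min_over P h n <= 2 * PI.
Proof.
  induction n; simpl; [lra|]. destruct (P n); auto. eapply Rle_trans; [apply Rmin_l|auto].
Qed.

Lemma min_over_glb P h n c : (forall k, (k < n)%nat -> P k = true -> c <= h k) -> c <= 2 * PI ->
  c <= min_over P h n.
Proof.
  induction n; simpl; intros H H2; auto. destruct (P n) eqn:E.
  - apply Rmin_glb; [apply IHn; auto|apply H; auto].
  - apply IHn; auto.
Qed.

Lemma min_over_ext P P' h h' n :
  (forall k, (k < n)%nat -> P k = P' k /\ (P k = true -> h k = h' k)) ->
  min_over P h n = min_over P' h' n.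
Proof.
  induction n; simpl; intros H; auto.
  rewrite IHn by (intros; apply H; lia). destruct (H n ltac:(lia)) as [-> Hh].
  destruct (P' n); auto. rewrite Hh; auto.
Qed.

Lemma min_over_cases P h n : (forall k, (k < n)%nat -> P k = true -> h k <= 2 * PI) ->
  (exists k, (k < n)%nat /\ P k = true /\ min_over P h n = h k) \/
  (min_over P h n = 2 * PI /\ forall k, (k < n)%nat -> P k = false).
Proof.
  induction n; simpl; intros Hh.
  - right; split; auto; intros; lia.
  - destruct (IHn ltac:(intros; apply Hh; auto)) as [[k [Hk [Pk Ek]]]|[E0 Hno]];
      destruct (P n) eqn:E.
    + unfold Rmin at 1; destruct Rle_dec.
      * left; exists k; auto.
      * left; exists n; auto.
    + left; exists k; auto.
    + left; exists n; repeat split; auto. rewrite E0. apply Rmin_right, Hh; auto.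
    + right; split; auto. intros k Hk. destruct (Nat.eq_dec k n); [subst; auto|apply Hno; lia].
Qed.

(** Ignoring player [e] gives the gaps that [e] finds around [z] after moving to [z]; with
    [e = n] nobody is ignored. The value [2 * PI] means that there is no other location. *)
Definition other_site (x : profile) (e : nat) (z : R) : nat -> bool :=
  fun k => negb (Nat.eqb k e) && negb (Reqb (x k) z).
Definition gap_r (x : profile) (n e : nat) (z : R) : R :=
  min_over (other_site x e z) (fun k => ccw z (x k)) n.
Definition gap_l (x : profile) (n e : nat) (z : R) : R :=
  min_over (other_site x e z) (fun k => ccw (x k) z) n.
Definition rgap (x : profile) (n : nat) (z : R) : R := gap_r x n n z.
Definition lgap (x : profile) (n : nat) (z : R) : R := gap_l x n n z.

Lemma other_site_true x e z k : other_site x e z k = true <-> k <> e /\ x k <> z.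
Proof.
  unfold other_site. rewrite Bool.andb_true_iff, !Bool.negb_true_iff, Reqb_false, Nat.eqb_neq.
  tauto.
Qed.

Lemma other_site_false x e z k : other_site x e z k = false <-> k = e \/ x k = z.
Proof.
  rewrite <- Bool.not_true_iff_false, other_site_true.
  destruct (Nat.eq_dec k e); destruct (Req_dec (x k) z); tauto.
Qed.

Lemma gap_r_cases x n e z : valid n x -> on_circle z ->
  (exists k, (k < n)%nat /\ k <> e /\ x k <> z /\ gap_r x n e z = ccw z (x k)) \/
  (gap_r x n e z = 2 * PI /\ forall k, (k < n)%nat -> k <> e -> x k = z).
Proof.
  intros Hv Hz. unfold gap_r.
  destruct (min_over_cases (other_site x e z) (fun k => ccw z (x k)) n)
    as [[k [Hk [Hp E]]]|[E H]].
  - intros k Hk _. pose proof (ccw_range z (x k) Hz (Hv k Hk)); lra.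
  - apply other_site_true in Hp. left; exists k; tauto.
  - right; split; auto. intros k Hk Hke. specialize (H k Hk). apply other_site_false in H. tauto.
Qed.

Lemma gap_l_cases x n e z : valid n x -> on_circle z ->
  (exists k, (k < n)%nat /\ k <> e /\ x k <> z /\ gap_l x n e z = ccw (x k) z) \/
  (gap_l x n e z = 2 * PI /\ forall k, (k < n)%nat -> k <> e -> x k = z).
Proof.
  intros Hv Hz. unfold gap_l.
  destruct (min_over_cases (other_site x e z) (fun k => ccw (x k) z) n)
    as [[k [Hk [Hp E]]]|[E H]].
  - intros k Hk _. pose proof (ccw_range (x k) z (Hv k Hk) Hz); lra.
  - apply other_site_true in Hp. left; exists k; tauto.
  - right; split; auto. intros k Hk Hke. specialize (H k Hk). apply other_site_false in H. tauto.
Qed.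

Lemma gap_r_le x n e z k : (k < n)%nat -> k <> e -> x k <> z -> gap_r x n e z <= ccw z (x k).
Proof. intros. apply (min_over_le _ (fun k => ccw z (x k))); auto. now apply other_site_true. Qed.

Lemma gap_l_le x n e z k : (k < n)%nat -> k <> e -> x k <> z -> gap_l x n e z <= ccw (x k) z.
Proof. intros. apply (min_over_le _ (fun k => ccw (x k) z)); auto. now apply other_site_true. Qed.

Lemma gap_r_le2 x n e z : gap_r x n e z <= 2 * PI.
Proof. apply min_over_le_2PI. Qed.

Lemma gap_l_le2 x n e z : gap_l x n e z <= 2 * PI.
Proof. apply min_over_le_2PI. Qed.

Lemma gap_r_ge x n e z c : (forall k, (k < n)%nat -> k <> e -> x k <> z -> c <= ccw z (x k)) ->
  c <= 2 * PI -> c <= gap_r x n e z.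
Proof.
  intros H H2. apply min_over_glb; auto. intros k Hk Hp. apply other_site_true in Hp. apply H; tauto.
Qed.

Lemma gap_l_ge x n e z c : (forall k, (k < n)%nat -> k <> e -> x k <> z -> c <= ccw (x k) z) ->
  c <= 2 * PI -> c <= gap_l x n e z.
Proof.
  intros H H2. apply min_over_glb; auto. intros k Hk Hp. apply other_site_true in Hp. apply H; tauto.
Qed.

Lemma gap_r_pos x n e z : valid n x -> on_circle z -> 0 < gap_r x n e z.
Proof.
  intros Hv Hz. destruct (gap_r_cases x n e z Hv Hz) as [[k [Hk [_ [Hne ->]]]]|[-> _]].
  - apply ccw_gt0; auto.
  - pose proof PI_RGT_0; lra.
Qed.

Lemma gap_l_pos x n e z : valid n x -> on_circle z -> 0 < gap_l x n e z.
Proof.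
  intros Hv Hz. destruct (gap_l_cases x n e z Hv Hz) as [[k [Hk [_ [Hne ->]]]]|[-> _]].
  - apply ccw_gt0; auto.
  - pose proof PI_RGT_0; lra.
Qed.

Lemma gap_r_except x n i : (i < n)%nat -> rgap x n (x i) = gap_r x n i (x i).
Proof.
  intros Hi. apply min_over_ext. intros k Hk. split; auto. unfold other_site.
  destruct (Nat.eq_dec k i) as [->|Hki].
  - rewrite Reqb_refl; simpl. now rewrite !andb_false_r.
  - rewrite (proj2 (Nat.eqb_neq k n)), (proj2 (Nat.eqb_neq k i)) by lia. reflexivity.
Qed.

Lemma gap_l_except x n i : (i < n)%nat -> lgap x n (x i) = gap_l x n i (x i).
Proof.
  intros Hi. apply min_over_ext. intros k Hk. split; auto. unfold other_site.
  destruct (Nat.eq_dec k i) as [->|Hki].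
  - rewrite Reqb_refl; simpl. now rewrite !andb_false_r.
  - rewrite (proj2 (Nat.eqb_neq k n)), (proj2 (Nat.eqb_neq k i)) by lia. reflexivity.
Qed.

Lemma arcd_lt_near_ccw z w y : on_circle z -> on_circle w -> on_circle y -> z <> w ->
  ccw z y < ccw z w / 2 -> arcd z y < arcd w y.
Proof.
  intros Hz Hw Hy Hzw Hd.
  pose proof (ccw_sym z w Hz Hw Hzw). pose proof (ccw_range z y Hz Hy).
  pose proof (ccw_range z w Hz Hw). pose proof (ccw_gt0 z w Hz Hw Hzw).
  assert (ccw y w = ccw z w - ccw z y) by (apply ccw_sub_l; auto; lra).
  assert (ccw w y = ccw w z + ccw z y) by (apply ccw_add; auto; lra).
  assert (arcd z y <= ccw z y) by (apply arcd_le_ccw; auto).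
  assert (ccw z y < arcd w y) by (apply arcd_gt; auto; lra). lra.
Qed.

Lemma arcd_lt_near_ccw_rev z w y : on_circle z -> on_circle w -> on_circle y -> z <> w ->
  ccw y z < ccw w z / 2 -> arcd z y < arcd w y.
Proof.
  intros Hz Hw Hy Hzw Hd.
  pose proof (ccw_sym z w Hz Hw Hzw). pose proof (ccw_range y z Hy Hz).
  pose proof (ccw_range w z Hw Hz). pose proof (ccw_gt0 z w Hz Hw Hzw).
  assert (ccw w y = ccw w z - ccw y z) by (apply ccw_sub_r; auto; lra).
  assert (ccw y w = ccw y z + ccw z w) by (apply ccw_add; auto; lra).
  assert (arcd z y <= ccw y z) by (apply arcd_le_ccw_rev; auto).
  assert (ccw y z < arcd w y) by (apply arcd_gt; auto; lra). lra.
Qed.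

Lemma arcd_lt_far_ccw z v y : on_circle z -> on_circle v -> on_circle y -> z <> v ->
  ccw z v / 2 < ccw z y -> ccw z y <= ccw y z -> arcd v y < arcd z y.
Proof.
  intros Hz Hv Hy Hzv H1 H2.
  assert (Ha : arcd z y = ccw z y) by (rewrite arcd_ccw by auto; apply Rmin_left; lra).
  pose proof (ccw_gt0 z v Hz Hv Hzv). rewrite Ha.
  destruct (Rle_dec (ccw z y) (ccw z v)).
  - assert (ccw y v = ccw z v - ccw z y) by (apply ccw_sub_l; auto).
    assert (arcd v y <= ccw y v) by (apply arcd_le_ccw_rev; auto). lra.
  - assert (ccw v y = ccw z y - ccw z v) by (apply ccw_sub_l; auto; lra).
    assert (arcd v y <= ccw v y) by (apply arcd_le_ccw; auto). lra.
Qed.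

Lemma arcd_lt_far_ccw_rev z u y : on_circle z -> on_circle u -> on_circle y -> z <> u ->
  ccw u z / 2 < ccw y z -> ccw y z <= ccw z y -> arcd u y < arcd z y.
Proof.
  intros Hz Hu Hy Hzu H1 H2.
  assert (Ha : arcd z y = ccw y z) by (rewrite arcd_ccw by auto; apply Rmin_right; lra).
  pose proof (ccw_gt0 u z Hu Hz (not_eq_sym Hzu)). rewrite Ha.
  destruct (Rle_dec (ccw y z) (ccw u z)).
  - assert (ccw u y = ccw u z - ccw y z) by (apply ccw_sub_r; auto).
    assert (arcd u y <= ccw u y) by (apply arcd_le_ccw; auto). lra.
  - assert (ccw y u = ccw y z - ccw u z) by (apply ccw_sub_r; auto; lra).
    assert (arcd u y <= ccw y u) by (apply arcd_le_ccw_rev; auto). lra.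
Qed.

Definition Rltb (a b : R) : bool := if Rlt_dec a b then true else false.

Lemma Rltb_true a b : Rltb a b = true <-> a < b.
Proof. unfold Rltb; destruct Rlt_dec; split; intros; auto; try congruence; lra. Qed.

Lemma Rltb_false a b : Rltb a b = false <-> b <= a.
Proof. unfold Rltb; destruct Rlt_dec; split; intros; auto; try congruence; lra. Qed.

(** With [r] and [l] the gaps at an occupied location [z], this is the Voronoi cell of [z]. *)
Definition in_cell (z r l y : R) : bool := Rltb (ccw z y) (r / 2) || Rltb (ccw y z) (l / 2).
Definition cell (x : profile) (n : nat) (z y : R) : bool := in_cell z (rgap x n z) (lgap x n z) y.

Section Cells.
Variable x : profile.
Variable n : nat.
Hypothesis Hv : valid n x.

Lemma cell_strictly_closest z y : on_circle z -> on_circle y -> cell x n z y = true ->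
  forall j, (j < n)%nat -> x j <> z -> arcd z y < arcd (x j) y.
Proof.
  intros Hz Hy Hc j Hj Hne. assert (Hw : on_circle (x j)) by (apply Hv; auto).
  unfold cell, in_cell in Hc. apply orb_true_iff in Hc. rewrite !Rltb_true in Hc.
  destruct Hc as [Hc|Hc].
  - assert (rgap x n z <= ccw z (x j)) by (apply gap_r_le; auto; lia).
    apply arcd_lt_near_ccw; auto; lra.
  - assert (lgap x n z <= ccw (x j) z) by (apply gap_l_le; auto; lia).
    apply arcd_lt_near_ccw_rev; auto; lra.
Qed.

Lemma closest_in_half_gaps z y : on_circle z -> on_circle y ->
  (forall j, (j < n)%nat -> arcd z y <= arcd (x j) y) ->
  ccw z y <= rgap x n z / 2 \/ ccw y z <= lgap x n z / 2.
Proof.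
  intros Hz Hy Hnear.
  destruct (Rle_dec (ccw z y) (rgap x n z / 2)) as [|Hr]; auto.
  destruct (Rle_dec (ccw y z) (lgap x n z / 2)) as [|Hl]; auto. exfalso.
  apply Rnot_le_lt in Hr, Hl. unfold rgap, lgap in *.
  pose proof (gap_r_pos x n n z Hv Hz). pose proof (ccw_range z y Hz Hy).
  assert (Hyz : y <> z) by (intros ->; rewrite ccw_refl in Hr; lra).
  assert (Hs : ccw y z = 2 * PI - ccw z y) by (apply ccw_sym; auto).
  destruct (gap_r_cases x n n z Hv Hz) as [[kv [Hkv [_ [Hvz Er]]]]|[Er Hall]];
    destruct (gap_l_cases x n n z Hv Hz) as [[ku [Hku [_ [Huz El]]]]|[El Hall']].
  - destruct (Rle_dec (ccw z y) (ccw y z)).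
    + specialize (Hnear kv Hkv).
      assert (arcd (x kv) y < arcd z y) by (apply arcd_lt_far_ccw; auto; lra). lra.
    + specialize (Hnear ku Hku).
      assert (arcd (x ku) y < arcd z y) by (apply arcd_lt_far_ccw_rev; auto; lra). lra.
  - apply Hvz, Hall'; auto; lia.
  - apply Huz, Hall; auto; lia.
  - lra.
Qed.

Fixpoint cell_boundaries (k : nat) : list R :=
  match k with
  | O => nil
  | S k' => x k' :: wrap (x k' + rgap x n (x k') / 2) :: wrap_neg (x k' - lgap x n (x k') / 2)
              :: cell_boundaries k'
  end.

Lemma not_in_cell_boundaries y k : ~ In y (cell_boundaries k) -> forall j, (j < k)%nat ->
  y <> wrap (x j + rgap x n (x j) / 2) /\ y <> wrap_neg (x j - lgap x n (x j) / 2).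
Proof.
  induction k; intros Hn j Hj; [lia|]. simpl in Hn.
  destruct (Nat.eq_dec j k) as [->|Hjk].
  - split; intro E; apply Hn; rewrite E; simpl; auto.
  - apply IHk; [tauto|lia].
Qed.

Lemma generic_consumer y : (1 <= n)%nat -> 0 < y < 2 * PI -> ~ In y (cell_boundaries n) ->
  exists j, (j < n)%nat /\ cell x n (x j) y = true /\ mind x n y = arcd (x j) y /\
    forall k, (k < n)%nat -> x k <> x j -> arcd (x j) y < arcd (x k) y.
Proof.
  intros Hn Hy Hex. assert (Hyo : on_circle y) by (unfold on_circle; lra).
  destruct (mind_spec x n y Hn) as [H1 [j [Hj E]]].
  assert (Hc : on_circle (x j)) by (apply Hv; auto).
  destruct (not_in_cell_boundaries y n Hex j Hj) as [Br Bl].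
  assert (Hcell : cell x n (x j) y = true).
  { unfold cell, in_cell. apply orb_true_iff.
    destruct (closest_in_half_gaps (x j) y Hc Hyo ltac:(intros; rewrite <- E; auto)) as [G|G].
    - left; apply Rltb_true. destruct (Req_dec (ccw (x j) y) (rgap x n (x j) / 2)); [|lra].
      exfalso. apply Br, ccw_wrap; auto.
    - right; apply Rltb_true. destruct (Req_dec (ccw y (x j)) (lgap x n (x j) / 2)); [|lra].
      exfalso. apply Bl, ccw_wrap_neg; auto. }
  exists j. repeat split; auto. intros k Hk Hne. apply cell_strictly_closest; auto.
Qed.

Lemma cell_eq_Reqb j k y : on_circle y -> (j < n)%nat -> (k < n)%nat -> cell x n (x j) y = true ->
  (forall k, (k < n)%nat -> x k <> x j -> arcd (x j) y < arcd (x k) y) ->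
  cell x n (x k) y = Reqb (x k) (x j).
Proof.
  intros Hy Hj Hk Hcj Hstr. destruct (Req_dec (x k) (x j)) as [E|E].
  - rewrite E, Reqb_refl. exact Hcj.
  - rewrite (proj2 (Reqb_false _ _) E).
    destruct (cell x n (x k) y) eqn:Ck; auto. exfalso.
    pose proof (Hstr k Hk E).
    pose proof (cell_strictly_closest (x k) y (Hv k Hk) Hy Ck j Hj (not_eq_sym E)). lra.
Qed.

Lemma closest_eq_Reqb y j : mind x n y = arcd (x j) y ->
  (forall k, (k < n)%nat -> x k <> x j -> arcd (x j) y < arcd (x k) y) ->
  forall k, (k < n)%nat -> closest x n y k = Reqb (x k) (x j).
Proof.
  intros Hm Hs k Hk. unfold closest. rewrite Hm. destruct (Req_dec (x k) (x j)) as [E|E].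
  - rewrite E, !Reqb_refl. auto.
  - rewrite (proj2 (Reqb_false _ _) E). apply Reqb_false. specialize (Hs k Hk E). lra.
Qed.

Hypothesis Hn : (1 <= n)%nat.

Lemma share_generic i y : (i < n)%nat -> 0 < y < 2 * PI -> ~ In y (cell_boundaries n) ->
  share x n i y = / nplayers_at x n (x i) * ind (cell x n (x i) y).
Proof.
  intros Hi Hy Hex. destruct (generic_consumer y Hn Hy Hex) as [j [Hj [Hcj [Hm Hs]]]].
  assert (Hyo : on_circle y) by (unfold on_circle; lra).
  assert (Hcl := closest_eq_Reqb y j Hm Hs).
  assert (Hncl : nclosest_locs x n y = 1).
  { unfold nclosest_locs. rewrite <- (count_first_at_present x n (x j)) by eauto.
    apply sumR_ext; intros k Hk. rewrite Hcl; auto. }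
  unfold share. rewrite Hcl, Hncl, (cell_eq_Reqb j i y) by auto.
  destruct (Reqb (x i) (x j)); simpl; [rewrite Rmult_1_l|]; lra.
Qed.

Lemma mind_generic y : 0 < y < 2 * PI -> ~ In y (cell_boundaries n) ->
  mind x n y = sumR n (fun k => ind (first_at x k) * (ind (cell x n (x k) y) * arcd (x k) y)).
Proof.
  intros Hy Hex. destruct (generic_consumer y Hn Hy Hex) as [j [Hj [Hcj [Hm Hs]]]].
  assert (Hyo : on_circle y) by (unfold on_circle; lra).
  rewrite Hm, <- (Rmult_1_r (arcd (x j) y)), <- (count_first_at_present x n (x j)) by eauto.
  rewrite <- sumR_scal. apply sumR_ext; intros k Hk.
  rewrite (cell_eq_Reqb j k y) by auto.
  destruct (Req_dec (x k) (x j)) as [E|E].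
  - rewrite E, Reqb_refl. destruct (first_at x k); simpl; lra.
  - rewrite (proj2 (Reqb_false _ _) E). simpl. lra.
Qed.

Lemma cells_cover y : 0 < y < 2 * PI -> ~ In y (cell_boundaries n) ->
  1 = sumR n (fun k => ind (first_at x k) * ind (cell x n (x k) y)).
Proof.
  intros Hy Hex. destruct (generic_consumer y Hn Hy Hex) as [j [Hj [Hcj [Hm Hs]]]].
  assert (Hyo : on_circle y) by (unfold on_circle; lra).
  rewrite <- (count_first_at_present x n (x j)) by eauto. apply sumR_ext; intros k Hk.
  rewrite (cell_eq_Reqb j k y) by auto.
  destruct (Reqb (x k) (x j)), (first_at x k); simpl; lra.
Qed.

End Cells.

Definition window (r l t : R) : R := ind (Rltb t (r / 2) || Rltb (2 * PI - t) (l / 2)).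

Lemma is_RInt_window r l : 0 < r <= 2 * PI -> 0 < l <= 2 * PI ->
  is_RInt (window r l) 0 (2 * PI) ((r + l) / 2).
Proof.
  intros Hr Hl. pose proof PI_RGT_0.
  replace ((r + l) / 2) with
    (((r / 2 - 0) * 1 + (2 * PI - l / 2 - r / 2) * 0) + (2 * PI - (2 * PI - l / 2)) * 1) by lra.
  apply (is_RInt_ChaslesR _ 0 (2 * PI - l / 2) (2 * PI));
    [apply (is_RInt_ChaslesR _ 0 (r / 2) (2 * PI - l / 2))|].
  - apply (is_RInt_ext_open _ (fun _ => 1)); [lra| |apply is_RInt_constR].
    intros t Ht. unfold window. rewrite (proj2 (Rltb_true _ _)) by lra. reflexivity.
  - apply (is_RInt_ext_open _ (fun _ => 0)); [lra| |apply is_RInt_constR].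
    intros t Ht. unfold window. rewrite !(proj2 (Rltb_false _ _)) by lra. reflexivity.
  - apply (is_RInt_ext_open _ (fun _ => 1)); [lra| |apply is_RInt_constR].
    intros t Ht. unfold window. rewrite (proj2 (Rltb_true (2 * PI - t) _)), orb_true_r by lra.
    reflexivity.
Qed.

Lemma is_RInt_window_dist r l : 0 < r <= 2 * PI -> 0 < l <= 2 * PI ->
  is_RInt (fun t => window r l t * Rmin t (2 * PI - t)) 0 (2 * PI) ((r * r + l * l) / 8).
Proof.
  intros Hr Hl. pose proof PI_RGT_0.
  replace ((r * r + l * l) / 8) with
    (((r / 2 * (r / 2) - 0 * 0) / 2 + (2 * PI - l / 2 - r / 2) * 0) +
     (2 * PI * (2 * PI - (2 * PI - l / 2))
      - (2 * PI * (2 * PI) - (2 * PI - l / 2) * (2 * PI - l / 2)) / 2)) by field.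
  apply (is_RInt_ChaslesR _ 0 (2 * PI - l / 2) (2 * PI));
    [apply (is_RInt_ChaslesR _ 0 (r / 2) (2 * PI - l / 2))|].
  - apply (is_RInt_ext_open _ (fun t => t)); [lra| |apply is_RInt_id].
    intros t Ht. unfold window. rewrite (proj2 (Rltb_true _ _)) by lra. simpl.
    unfold Rmin; destruct Rle_dec; lra.
  - apply (is_RInt_ext_open _ (fun _ => 0)); [lra| |apply is_RInt_constR].
    intros t Ht. unfold window. rewrite !(proj2 (Rltb_false _ _)) by lra. simpl; lra.
  - apply (is_RInt_ext_open _ (fun t => 2 * PI - t)); [lra| |apply is_RInt_2PI_minus].
    intros t Ht. unfold window. rewrite (proj2 (Rltb_true (2 * PI - t) _)), orb_true_r by lra.
    simpl. unfold Rmin; destruct Rle_dec; lra.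
Qed.

Lemma in_cell_window z r l y : on_circle z -> on_circle y -> y <> z ->
  ind (in_cell z r l y) = window r l (ccw z y).
Proof. intros Hz Hy Hyz. unfold in_cell, window. rewrite (ccw_sym z y); auto. Qed.

Lemma is_RInt_in_cell z r l : on_circle z -> 0 < r <= 2 * PI -> 0 < l <= 2 * PI ->
  is_RInt (fun y => ind (in_cell z r l y)) 0 (2 * PI) ((r + l) / 2).
Proof.
  intros Hz Hr Hl. pose proof PI_RGT_0.
  apply (is_RInt_ext_but_finite (z :: nil) _ (fun y => window r l (ccw z y))); [lra| |].
  - intros y Hy Hn. apply in_cell_window; auto; [unfold on_circle; lra|].
    intros ->; apply Hn; simpl; auto.
  - apply is_RInt_rotate, is_RInt_window; auto.
Qed.

Lemma is_RInt_in_cell_dist z r l : on_circle z -> 0 < r <= 2 * PI -> 0 < l <= 2 * PI ->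
  is_RInt (fun y => ind (in_cell z r l y) * arcd z y) 0 (2 * PI) ((r * r + l * l) / 8).
Proof.
  intros Hz Hr Hl. pose proof PI_RGT_0.
  apply (is_RInt_ext_but_finite (z :: nil) _
           (fun y => window r l (ccw z y) * Rmin (ccw z y) (2 * PI - ccw z y))); [lra| |].
  - intros y Hy Hn. assert (Hyo : on_circle y) by (unfold on_circle; lra).
    assert (Hyz : y <> z) by (intros ->; apply Hn; simpl; auto).
    rewrite in_cell_window, arcd_ccw, (ccw_sym z y) by auto. reflexivity.
  - apply (is_RInt_rotate (fun t => window r l t * Rmin t (2 * PI - t))), is_RInt_window_dist; auto.
Qed.

Section Formulas.
Variable x : profile.
Variable n : nat.
Hypothesis Hv : valid n x.
Hypothesis Hn : (1 <= n)%nat.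

Lemma rgap_range j : (j < n)%nat -> 0 < rgap x n (x j) <= 2 * PI.
Proof. intros; split; [apply gap_r_pos; auto|apply gap_r_le2]. Qed.

Lemma lgap_range j : (j < n)%nat -> 0 < lgap x n (x j) <= 2 * PI.
Proof. intros; split; [apply gap_l_pos; auto|apply gap_l_le2]. Qed.

Lemma is_RInt_cell j : (j < n)%nat ->
  is_RInt (fun y => ind (cell x n (x j) y)) 0 (2 * PI) ((rgap x n (x j) + lgap x n (x j)) / 2).
Proof. intros. apply is_RInt_in_cell; auto using rgap_range, lgap_range. Qed.

Lemma payoff_eq i : (i < n)%nat ->
  payoff x n i = / nplayers_at x n (x i) * ((rgap x n (x i) + lgap x n (x i)) / 2).
Proof.
  intros Hi. apply Rint_of_is_RInt. pose proof PI_RGT_0.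
  apply (is_RInt_ext_but_finite (cell_boundaries x n n) _
           (fun y => / nplayers_at x n (x i) * ind (cell x n (x i) y))); [lra| |].
  - intros y Hy Hex. apply share_generic; auto.
  - apply is_RInt_scalR, is_RInt_cell; auto.
Qed.

Lemma social_cost_eq : social_cost x n =
  sumR n (fun j => ind (first_at x j) *
                   ((rgap x n (x j) * rgap x n (x j) + lgap x n (x j) * lgap x n (x j)) / 8)).
Proof.
  apply Rint_of_is_RInt. pose proof PI_RGT_0.
  apply (is_RInt_ext_but_finite (cell_boundaries x n n) _
    (fun y => sumR n (fun j => ind (first_at x j) * (ind (cell x n (x j) y) * arcd (x j) y))));
    [lra| |].
  - intros y Hy Hex. apply mind_generic; auto.
  - apply (is_RInt_sumR 0 (2 * PI)
             (fun j y => ind (first_at x j) * (ind (cell x n (x j) y) * arcd (x j) y))).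
    intros j Hj. apply is_RInt_scalR, is_RInt_in_cell_dist; auto using rgap_range, lgap_range.
Qed.

Lemma sum_gaps :
  sumR n (fun j => ind (first_at x j) * (rgap x n (x j) + lgap x n (x j))) = 4 * PI.
Proof.
  pose proof PI_RGT_0.
  assert (Hcells : sumR n (fun j => ind (first_at x j) * ((rgap x n (x j) + lgap x n (x j)) / 2))
                   = 2 * PI).
  { apply (is_RInt_uniqueR (fun _ => 1) 0 (2 * PI)).
    - apply (is_RInt_ext_but_finite (cell_boundaries x n n) _
               (fun y => sumR n (fun j => ind (first_at x j) * ind (cell x n (x j) y)))); [lra| |].
      + intros y Hy Hex. apply cells_cover; auto.
      + apply (is_RInt_sumR 0 (2 * PI) (fun j y => ind (first_at x j) * ind (cell x n (x j) y))).
        intros j Hj. apply is_RInt_scalR, is_RInt_cell; auto.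
    - replace (2 * PI) with ((2 * PI - 0) * 1) at 2 by lra. apply is_RInt_constR. }
  replace (4 * PI) with (2 * (2 * PI)) by lra. rewrite <- Hcells, <- sumR_scal.
  apply sumR_ext; intros; lra.
Qed.

End Formulas.

Lemma upd_valid n x i p : valid n x -> on_circle p -> valid n (upd x i p).
Proof. intros Hv Hp j Hj. unfold upd. destruct (Nat.eqb j i); auto. Qed.

Lemma gap_r_upd x n i p z : gap_r (upd x i p) n i z = gap_r x n i z.
Proof.
  apply min_over_ext. intros k Hk. unfold other_site, upd.
  destruct (Nat.eqb k i); simpl; split; auto; discriminate.
Qed.

Lemma payoff_le_2PI x n i : valid n x -> (1 <= n)%nat -> (i < n)%nat -> payoff x n i <= 2 * PI.
Proof.
  intros Hv Hn Hi. rewrite payoff_eq by auto.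
  pose proof (rgap_range x n Hv i Hi). pose proof (lgap_range x n Hv i Hi).
  pose proof (nplayers_ge1 x n (x i) i Hi eq_refl).
  assert (/ nplayers_at x n (x i) <= 1) by (rewrite <- Rinv_1; apply Rinv_le_contravar; lra).
  assert (0 < / nplayers_at x n (x i)) by (apply Rinv_0_lt_compat; lra).
  apply Rle_trans with (1 * ((rgap x n (x i) + lgap x n (x i)) / 2)); [|lra].
  apply Rmult_le_compat_r; lra.
Qed.

Lemma gap_l_le_neighbour_gap_r x n e z kz : valid n x -> (kz < n)%nat -> kz <> e -> x kz = z ->
  exists k, (k < n)%nat /\ k <> e /\ gap_l x n e z <= gap_r x n e (x k).
Proof.
  intros Hv Hkz Hke Hz. assert (Hzo : on_circle z) by (subst; apply Hv; auto).
  destruct (gap_l_cases x n e z Hv Hzo) as [[ku [Hku [Hkue [Hne El]]]]|[El Hall]].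
  - exists ku. repeat split; auto. rewrite El.
    assert (Huo : on_circle (x ku)) by (apply Hv; auto).
    apply gap_r_ge; [|pose proof (ccw_range (x ku) z Huo Hzo); lra].
    intros k Hk Hke' Hku'. assert (Hwo : on_circle (x k)) by (apply Hv; auto).
    destruct (Rle_dec (ccw (x ku) z) (ccw (x ku) (x k))) as [|Hlt]; auto. exfalso.
    destruct (Req_dec (x k) z) as [E|E]; [rewrite E in Hlt; lra|].
    assert (ccw (x k) z = ccw (x ku) z - ccw (x ku) (x k)) by (apply ccw_sub_l; auto; lra).
    pose proof (ccw_gt0 (x ku) (x k) Huo Hwo (not_eq_sym Hku')).
    assert (gap_l x n e z <= ccw (x k) z) by (apply gap_l_le; auto). lra.
  - exists kz. repeat split; auto. rewrite El, Hz.
    destruct (gap_r_cases x n e z Hv Hzo) as [[kv [Hkv [Hkve [Hne Er]]]]|[Er _]].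
    + exfalso; apply Hne, Hall; auto.
    + lra.
Qed.

(* A lone player's cell is contained in the gap that its two neighbours see between them. *)
Lemma gaps_le_neighbour_gap_r x n i : valid n x -> (2 <= n)%nat -> (i < n)%nat ->
  (forall k, (k < n)%nat -> k <> i -> x k <> x i) ->
  exists k, (k < n)%nat /\ k <> i /\ gap_r x n i (x i) + gap_l x n i (x i) <= gap_r x n i (x k).
Proof.
  intros Hv Hn2 Hi Halone. set (p := x i). assert (Hpo : on_circle p) by (apply Hv; auto).
  destruct (gap_l_cases x n i p Hv Hpo) as [[ku [Hku [Hkui [Hne El]]]]|[El Hall]].
  2:{ exfalso. destruct (Nat.eq_dec i 0);
      [apply (Halone 1%nat)|apply (Halone 0%nat)]; try lia; apply Hall; lia. }
  exists ku. repeat split; auto.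
  assert (Huo : on_circle (x ku)) by (apply Hv; auto).
  destruct (gap_r_cases x n i (x ku) Hv Huo) as [[kv [Hkv [Hkvi [Hne2 Er]]]]|[Er Hall]].
  - assert (Hvo : on_circle (x kv)) by (apply Hv; auto).
    assert (Hvp : x kv <> p) by (apply Halone; auto).
    pose proof (ccw_gt0 (x ku) (x kv) Huo Hvo (not_eq_sym Hne2)).
    assert (gap_l x n i p <= ccw (x kv) p) by (apply gap_l_le; auto).
    assert (Hlt : ccw (x ku) p < ccw (x ku) (x kv)).
    { destruct (Rlt_dec (ccw (x ku) p) (ccw (x ku) (x kv))) as [|Hge]; auto. exfalso.
      assert (ccw (x kv) p = ccw (x ku) p - ccw (x ku) (x kv)) by (apply ccw_sub_l; auto; lra).
      lra. }
    assert (ccw p (x kv) = ccw (x ku) (x kv) - ccw (x ku) p) by (apply ccw_sub_l; auto; lra).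
    assert (gap_r x n i p <= ccw p (x kv)) by (apply gap_r_le; auto; congruence).
    lra.
  - assert (Rv : gap_r x n i p <= ccw p (x ku)) by (apply gap_r_le; auto; apply Halone; auto).
    rewrite (ccw_sym (x ku) p) in Rv by (auto; apply Halone; auto).
    lra.
Qed.

Lemma payoff_le_half_gap_bound x n i G : valid n x -> (2 <= n)%nat -> (i < n)%nat ->
  (forall k, (k < n)%nat -> k <> i -> gap_r x n i (x k) <= G) ->
  payoff x n i <= G / 2.
Proof.
  intros Hv Hn2 Hi HG. set (p := x i). assert (Hpo : on_circle p) by (apply Hv; auto).
  rewrite payoff_eq, (gap_r_except x n i Hi), (gap_l_except x n i Hi) by (auto; lia). fold p.
  pose proof (gap_r_pos x n i p Hv Hpo). pose proof (gap_l_pos x n i p Hv Hpo).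
  set (q := nplayers_at x n p).
  assert (Hq1 : 1 <= q) by (apply (nplayers_ge1 x n p i Hi eq_refl)).
  assert (0 < / q) by (apply Rinv_0_lt_compat; lra).
  destruct (classic (exists k, (k < n)%nat /\ k <> i /\ x k = p)) as [[k [Hk [Hki Hxk]]]|Halone].
  - assert (Hq2 : 2 <= q) by (apply (nplayers_ge2 x n p i k); auto).
    assert (/ q <= / 2) by (apply Rinv_le_contravar; lra).
    assert (gap_r x n i p <= G) by (rewrite <- Hxk; apply HG; auto).
    destruct (gap_l_le_neighbour_gap_r x n i p k Hv Hk Hki Hxk) as [k' [Hk' [Hk'i B]]].
    specialize (HG k' Hk' Hk'i).
    apply Rle_trans with (/ 2 * ((gap_r x n i p + gap_l x n i p) / 2)); [|lra].
    apply Rmult_le_compat_r; lra.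
  - assert (Halone' : forall k, (k < n)%nat -> k <> i -> x k <> x i)
      by (intros k Hk Hki E; apply Halone; eauto).
    assert (/ q <= 1) by (rewrite <- Rinv_1; apply Rinv_le_contravar; lra).
    destruct (gaps_le_neighbour_gap_r x n i Hv Hn2 Hi Halone') as [k [Hk [Hki Hsum]]].
    fold p in Hsum. specialize (HG k Hk Hki).
    apply Rle_trans with (1 * ((gap_r x n i p + gap_l x n i p) / 2)); [|lra].
    apply Rmult_le_compat_r; lra.
Qed.

Lemma payoff_alone_ge x n i d : valid n x -> (1 <= n)%nat -> (i < n)%nat -> d <= 2 * PI ->
  (forall k, (k < n)%nat -> k <> i -> x k <> x i /\ d <= ccw (x i) (x k) /\ d <= ccw (x k) (x i)) ->
  d <= payoff x n i.
Proof.
  intros Hv Hn Hi Hd Hfar. rewrite payoff_eq by auto.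
  rewrite (nplayers_alone x n i Hi) by (intros k Hk Hki; apply Hfar; auto).
  assert (d <= rgap x n (x i)).
  { apply gap_r_ge; auto. intros k Hk _ Hne. destruct (Nat.eq_dec k i) as [->|Hki]; [congruence|].
    apply Hfar; auto. }
  assert (d <= lgap x n (x i)).
  { apply gap_l_ge; auto. intros k Hk _ Hne. destruct (Nat.eq_dec k i) as [->|Hki]; [congruence|].
    apply Hfar; auto. }
  rewrite Rinv_1. lra.
Qed.

Fixpoint max_over (h : nat -> R) (n : nat) : R :=
  match n with O => 0 | S k => Rmax (max_over h k) (h k) end.

Lemma max_over_ge h n j : (j < n)%nat -> h j <= max_over h n.
Proof.
  induction n; intros Hj; simpl; [lia|]. destruct (Nat.eq_dec j n) as [->|Hjn].
  - apply Rmax_r.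
  - eapply Rle_trans; [apply IHn; lia|apply Rmax_l].
Qed.

Lemma max_over_attained h n : (1 <= n)%nat -> (forall j, (j < n)%nat -> 0 <= h j) ->
  exists j, (j < n)%nat /\ max_over h n = h j.
Proof.
  induction n; intros Hn Hp; [lia|]. simpl. destruct n.
  - exists 0%nat; split; auto. simpl. apply Rmax_right, Hp; lia.
  - destruct IHn as [j [Hj E]]; [lia|intros; apply Hp; lia|].
    unfold Rmax; destruct Rle_dec.
    + exists (S n); split; auto.
    + exists j; split; auto; lia.
Qed.

Definition max_gap (x : profile) (n : nat) : R := max_over (fun j => rgap x n (x j)) n.

Section MaxGap.
Variable x : profile.
Variable n : nat.
Hypothesis Hv : valid n x.
Hypothesis Hn : (1 <= n)%nat.

Lemma max_gap_attained : exists j, (j < n)%nat /\ max_gap x n = rgap x n (x j).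
Proof.
  apply max_over_attained; auto. intros j Hj. left; apply gap_r_pos; auto.
Qed.

Lemma max_gap_range : 0 < max_gap x n <= 2 * PI.
Proof.
  destruct max_gap_attained as [j [Hj ->]]. split; [apply gap_r_pos; auto|apply gap_r_le2].
Qed.

Lemma rgap_le_max_gap j : (j < n)%nat -> rgap x n (x j) <= max_gap x n.
Proof. intros. apply (max_over_ge (fun j => rgap x n (x j))); auto. Qed.

Lemma lgap_le_max_gap j : (j < n)%nat -> lgap x n (x j) <= max_gap x n.
Proof.
  intros Hj. destruct (gap_l_le_neighbour_gap_r x n n (x j) j Hv Hj ltac:(lia) eq_refl)
    as [k [Hk [_ H]]].
  eapply Rle_trans; [apply H|]. apply rgap_le_max_gap; auto.
Qed.

Lemma max_gap_midpoint : exists p, on_circle p /\ forall k, (k < n)%nat ->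
  x k <> p /\ max_gap x n / 2 <= ccw p (x k) /\ max_gap x n / 2 <= ccw (x k) p.
Proof.
  destruct max_gap_attained as [j [Hj EM]]. set (M := max_gap x n) in *.
  pose proof max_gap_range as HM. fold M in HM.
  assert (Hu : on_circle (x j)) by (apply Hv; auto).
  destruct (wrap_ccw (x j) (M / 2) Hu ltac:(lra)) as [Hpo Hoff].
  set (p := wrap (x j + M / 2)) in *. exists p. split; auto.
  intros k Hk. assert (Hko : on_circle (x k)) by (apply Hv; auto).
  assert (Hfar : 0 < ccw (x j) (x k) -> M <= ccw (x j) (x k)).
  { intros Hpos. rewrite EM. apply gap_r_le; [auto|lia|].
    intros E. rewrite E, ccw_refl in Hpos. lra. }
  pose proof (ccw_range p (x k) Hpo Hko). pose proof (ccw_range (x k) p Hko Hpo).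
  repeat split.
  - intros E. rewrite <- E in Hoff. specialize (Hfar ltac:(lra)). lra.
  - destruct (Rle_dec (M / 2) (ccw p (x k))) as [|Hl]; auto. exfalso.
    assert (ccw (x j) (x k) = ccw (x j) p + ccw p (x k)) by (apply ccw_add; auto; lra).
    specialize (Hfar ltac:(lra)). lra.
  - destruct (Rle_dec (M / 2) (ccw (x k) p)) as [|Hl]; auto. exfalso.
    assert (ccw (x j) (x k) = ccw (x j) p - ccw (x k) p) by (apply ccw_sub_r; auto; lra).
    specialize (Hfar ltac:(lra)). lra.
Qed.

Lemma social_cost_le_max_gap : social_cost x n <= max_gap x n * PI / 2.
Proof.
  rewrite social_cost_eq by auto.
  apply Rle_trans with (sumR n (fun j => max_gap x n / 8 *
                         (ind (first_at x j) * (rgap x n (x j) + lgap x n (x j))))).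
  - apply sumR_le. intros j Hj. pose proof (rgap_le_max_gap j Hj). pose proof (lgap_le_max_gap j Hj).
    pose proof (rgap_range x n Hv j Hj). pose proof (lgap_range x n Hv j Hj).
    pose proof (ind_range (first_at x j)).
    assert (rgap x n (x j) * rgap x n (x j) + lgap x n (x j) * lgap x n (x j)
            <= max_gap x n * (rgap x n (x j) + lgap x n (x j))) by nra.
    nra.
  - rewrite sumR_scal, sum_gaps by auto. lra.
Qed.

End MaxGap.

Section Equilibrium.
Variable n : nat.
Variable x : profile.
Hypothesis HNE : is_NE n x.
Hypothesis Hn : (1 <= n)%nat.

Let Hv : valid n x := proj1 HNE.

(* Moving to the middle of a largest gap earns half of it. *)
Lemma NE_nplayers_max_gap i : (i < n)%nat ->
  nplayers_at x n (x i) * max_gap x n <= rgap x n (x i) + lgap x n (x i).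
Proof.
  intros Hi. pose proof (max_gap_range x n Hv Hn) as HM.
  destruct (max_gap_midpoint x n Hv Hn) as [p [Hp Hfar]].
  set (y := upd x i p).
  assert (Hyi : y i = p) by (unfold y, upd; rewrite Nat.eqb_refl; auto).
  assert (Hyk : forall k, k <> i -> y k = x k)
    by (intros k Hk; unfold y, upd; rewrite (proj2 (Nat.eqb_neq k i)); auto).
  assert (Hdev : max_gap x n / 2 <= payoff y n i).
  { apply payoff_alone_ge; [apply upd_valid; auto|exact Hn|exact Hi|lra|].
    intros k Hk Hki. rewrite Hyi, Hyk by auto. destruct (Hfar k Hk) as [? [? ?]]. auto. }
  pose proof (proj2 HNE i Hi p Hp) as Hbest. fold y in Hbest.
  rewrite (payoff_eq x n Hv Hn i Hi) in Hbest.
  assert (Hq : 1 <= nplayers_at x n (x i)) by (apply (nplayers_ge1 x n (x i) i); auto).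
  set (q := nplayers_at x n (x i)) in *.
  assert (max_gap x n <= / q * (rgap x n (x i) + lgap x n (x i))) by lra.
  apply (Rmult_le_compat_l q) in H; [|lra].
  rewrite <- Rmult_assoc, Rinv_r, Rmult_1_l in H by lra. lra.
Qed.

Lemma NE_nplayers_1_or_2 i : (i < n)%nat ->
  nplayers_at x n (x i) = 1 \/ nplayers_at x n (x i) = 2.
Proof.
  intros Hi. apply (nplayers_le2_cases x n (x i) i Hi eq_refl).
  pose proof (NE_nplayers_max_gap i Hi). pose proof (rgap_le_max_gap x n i Hi).
  pose proof (lgap_le_max_gap x n Hv Hn i Hi). pose proof (max_gap_range x n Hv Hn).
  destruct (Rle_dec (nplayers_at x n (x i)) 2); auto. nra.
Qed.

Lemma NE_max_gap_bound : INR n * max_gap x n <= 4 * PI.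
Proof.
  rewrite <- (sum_gaps x n Hv Hn), <- (sum_first_at_nplayers x n), Rmult_comm, <- sumR_scal.
  apply sumR_le. intros j Hj. rewrite <- Rmult_assoc, (Rmult_comm (max_gap x n)), Rmult_assoc.
  apply Rmult_le_compat_l; [apply ind_range|]. rewrite Rmult_comm. apply NE_nplayers_max_gap; auto.
Qed.

End Equilibrium.

Definition ccw_lt (v : R) (a b : R) : Prop := ccw v a < ccw v b.

(* A point already present is dropped, so sorted lists have no duplicates. *)
Fixpoint insert_ccw (v a : R) (l : list R) : list R :=
  match l with
  | nil => a :: nil
  | b :: t => if Rlt_dec (ccw v a) (ccw v b) then a :: b :: t
              else if Rlt_dec (ccw v b) (ccw v a) then b :: insert_ccw v a t else b :: t
  end.

Fixpoint sort_ccw (v : R) (l : list R) : list R :=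
  match l with nil => nil | a :: t => insert_ccw v a (sort_ccw v t) end.

Lemma insert_ccw_In v a l w : on_circle v -> on_circle a -> Forall on_circle l ->
  (In w (insert_ccw v a l) <-> w = a \/ In w l).
Proof.
  intros Hv Ha. induction l as [|b t IH]; intros Hl; simpl.
  - split; intros [H|H]; auto; contradiction.
  - inversion Hl; subst. destruct Rlt_dec; [simpl; intuition (subst; auto)|]. destruct Rlt_dec.
    + simpl. rewrite IH by auto. intuition (subst; auto).
    + assert (a = b) by (apply (ccw_inj v); auto; lra). subst. simpl. intuition.
Qed.

Lemma insert_ccw_sorted v a l : on_circle v -> on_circle a -> Forall on_circle l ->
  StronglySorted (ccw_lt v) l -> StronglySorted (ccw_lt v) (insert_ccw v a l).
Proof.
  intros Hv Ha. induction l as [|b t IH]; intros Hl Hs; simpl.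
  - constructor; constructor.
  - inversion Hl; subst. inversion Hs as [|? ? Ht Hbt]; subst. rewrite Forall_forall in Hbt.
    unfold ccw_lt in *. destruct Rlt_dec.
    + constructor; auto. constructor; [auto|]. apply Forall_forall.
      intros c Hc. specialize (Hbt c Hc). lra.
    + destruct Rlt_dec; constructor; auto.
      apply Forall_forall. intros c Hc. apply insert_ccw_In in Hc; auto.
      destruct Hc as [->|Hc]; [lra|auto].
      apply Forall_forall; auto.
Qed.

Lemma sort_ccw_spec v l : on_circle v -> Forall on_circle l ->
  StronglySorted (ccw_lt v) (sort_ccw v l) /\ (forall w, In w (sort_ccw v l) <-> In w l).
Proof.
  intros Hv. induction l as [|a t IH]; intros Hl; simpl.
  - split; [constructor|tauto].
  - inversion Hl; subst. destruct (IH H2) as [Hs Hin].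
    assert (Forall on_circle (sort_ccw v t)).
    { apply Forall_forall. intros w Hw. apply Hin in Hw. rewrite Forall_forall in H2; auto. }
    split; [apply insert_ccw_sorted; auto|].
    intros w. rewrite insert_ccw_In, Hin by auto. simpl. intuition congruence.
Qed.

Lemma sorted_ccw_NoDup v l : StronglySorted (ccw_lt v) l -> NoDup l.
Proof.
  induction 1 as [|a l _ IH Ha]; constructor; auto. intros Hin. rewrite Forall_forall in Ha.
  specialize (Ha a Hin). unfold ccw_lt in Ha; lra.
Qed.

Lemma StronglySorted_split {A : Type} (Rel : A -> A -> Prop) pre a t :
  StronglySorted Rel (pre ++ a :: t) ->
  (forall w, In w pre -> Rel w a) /\ (forall w, In w t -> Rel a w).
Proof.
  induction pre as [|b pre IH]; simpl; intros Hs.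
  - inversion Hs as [|? ? _ Ha]. rewrite Forall_forall in Ha. split; [tauto|auto].
  - inversion Hs as [|? ? Hs' Hb]. rewrite Forall_forall in Hb.
    destruct (IH Hs') as [H1 H2]. split; auto.
    intros w [<-|Hw]; auto. apply Hb, in_or_app; simpl; auto.
Qed.

Fixpoint locations (x : profile) (n : nat) : list R :=
  match n with O => nil | S k => x k :: locations x k end.

Lemma In_locations x n w : In w (locations x n) <-> exists k, (k < n)%nat /\ x k = w.
Proof.
  induction n; simpl.
  - split; [tauto|intros [k [Hk _]]; lia].
  - rewrite IHn. split.
    + intros [H|[k [Hk H]]]; [exists n|exists k]; split; auto.
    + intros [k [Hk H]]. destruct (Nat.eq_dec k n); [subst; auto|right; exists k; split; auto; lia].
Qed.

Fixpoint lsum (f : R -> R) (l : list R) : R :=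
  match l with nil => 0 | a :: t => f a + lsum f t end.

Lemma lsum_sumR (g : nat -> R -> R) l n :
  lsum (fun a => sumR n (fun j => g j a)) l = sumR n (fun j => lsum (g j) l).
Proof.
  induction l; simpl.
  - symmetry; apply sumR_zero; auto.
  - rewrite IHl, <- sumR_plus. auto.
Qed.

Lemma lsum_count l c : NoDup l -> In c l -> lsum (fun a => ind (Reqb c a)) l = 1.
Proof.
  induction 1 as [|c0 l0 Hn Hnd IH]; simpl; [tauto|]. intros [E|Hin].
  - subst. rewrite Reqb_refl. enough (lsum (fun a => ind (Reqb c a)) l0 = 0) by (simpl; lra).
    clear IH Hnd. induction l0 as [|a l0 IH0]; simpl; auto.
    rewrite (proj2 (Reqb_false c a)) by (intro; apply Hn; simpl; auto).
    rewrite IH0 by (intro; apply Hn; simpl; auto). simpl; lra.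
  - rewrite IH by auto. rewrite (proj2 (Reqb_false c c0)); [simpl; lra|]. intros ->; tauto.
Qed.

Lemma lsum_nplayers x n l : NoDup l -> (forall j, (j < n)%nat -> In (x j) l) ->
  lsum (nplayers_at x n) l = INR n.
Proof.
  intros Hnd Hc. unfold nplayers_at. rewrite (lsum_sumR (fun j a => ind (Reqb (x j) a))).
  rewrite <- (Rmult_1_r (INR n)), <- sumR_const. apply sumR_ext. intros j Hj.
  apply lsum_count; auto.
Qed.

(** [kap] measures positions from the base point of a list of locations sorted
    counterclockwise; the gap after the last location wraps around to the base point. *)
Definition next_gap (kap : R -> R) (a : R) (t : list R) : R :=
  match t with nil => 2 * PI - kap a | c :: _ => kap c - kap a end.

Lemma ccw_wrap_base v a w : on_circle v -> on_circle a -> on_circle w ->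
  ccw v w < ccw v a -> ccw a w = 2 * PI - ccw v a + ccw v w.
Proof.
  intros Hv Ha Hw H. assert (a <> w) by (intros ->; lra).
  rewrite (ccw_sym w a), (ccw_sub_l v w a) by (auto; lra). lra.
Qed.

Section SortedLocations.
Variable x : profile.
Variable n : nat.
Hypothesis Hv : valid n x.
Variable z0 : R.
Hypothesis Hz0 : exists k, (k < n)%nat /\ x k = z0.

Let kap := ccw z0.
Let zs := sort_ccw z0 (locations x n).

Lemma z0_on_circle : on_circle z0.
Proof. destruct Hz0 as [k [Hk <-]]. apply Hv; auto. Qed.

Lemma sorted_locations_spec :
  StronglySorted (ccw_lt z0) zs /\ forall w, In w zs <-> exists k, (k < n)%nat /\ x k = w.
Proof.
  destruct (sort_ccw_spec z0 (locations x n)) as [Hs Hin].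
  - exact z0_on_circle.
  - apply Forall_forall. intros w Hw. apply In_locations in Hw as [k [Hk <-]]. apply Hv; auto.
  - split; [exact Hs|]. intros w. unfold zs. rewrite Hin. apply In_locations.
Qed.

Lemma sorted_locations_split pre a t : zs = pre ++ a :: t ->
  (forall w, In w pre -> kap w < kap a) /\ (forall w, In w t -> kap a < kap w) /\
  forall k, (k < n)%nat -> x k = a \/ In (x k) pre \/ In (x k) t.
Proof.
  intros Ezs. destruct sorted_locations_spec as [Hs Hin]. rewrite Ezs in Hs.
  destruct (StronglySorted_split _ _ _ _ Hs) as [H1 H2]. split; [|split]; auto.
  intros k Hk. assert (In (x k) zs) by (apply Hin; eauto). rewrite Ezs in H.
  apply in_app_or in H. simpl in H. destruct H as [H|[H|H]]; auto.
Qed.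

Lemma location_on_circle w : In w zs -> on_circle w.
Proof.
  intros Hw. destruct (proj1 (proj2 sorted_locations_spec w) Hw) as [k [Hk <-]]. apply Hv; auto.
Qed.

Lemma kap_range w : on_circle w -> 0 <= kap w < 2 * PI.
Proof. intros. apply ccw_range; auto. exact z0_on_circle. Qed.

Lemma ccw_kap a c : on_circle a -> on_circle c -> kap a <= kap c -> ccw a c = kap c - kap a.
Proof. intros. apply ccw_sub_l; auto. exact z0_on_circle. Qed.

Lemma ccw_kap_wrap a w : on_circle a -> on_circle w -> kap w < kap a ->
  ccw a w = 2 * PI - kap a + kap w.
Proof. intros. apply ccw_wrap_base; auto. exact z0_on_circle. Qed.

Lemma In_split_app pre a t w : zs = pre ++ a :: t -> In w pre \/ w = a \/ In w t -> In w zs.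
Proof. intros -> Hw. apply in_or_app. simpl. intuition. Qed.

Lemma next_gap_le pre a t : zs = pre ++ a :: t -> next_gap kap a t <= 2 * PI - kap a.
Proof.
  intros Ezs. destruct t as [|c t]; simpl; [lra|].
  assert (Hc : on_circle c) by (apply location_on_circle, (In_split_app pre a (c :: t)); simpl; auto).
  pose proof (kap_range c Hc). lra.
Qed.

Lemma next_gap_le_ccw pre a t k : zs = pre ++ a :: t -> (k < n)%nat -> x k <> a ->
  next_gap kap a t <= ccw a (x k).
Proof.
  intros Ezs Hk Hne. destruct (sorted_locations_split pre a t Ezs) as [Hpre [Ht Hall]].
  assert (Ha : on_circle a) by (apply location_on_circle, (In_split_app pre a t); auto).
  pose proof (Hv k Hk) as Hxk. pose proof (kap_range _ Hxk). pose proof (next_gap_le pre a t Ezs).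
  destruct (Hall k Hk) as [E|[Hw|Hw]]; [congruence| |].
  - rewrite ccw_kap_wrap by auto. lra.
  - rewrite ccw_kap by (auto; pose proof (Ht _ Hw); lra).
    destruct t as [|c t]; [contradiction|simpl].
    destruct Hw as [<-|Hw]; [lra|].
    assert (Ezs' : zs = (pre ++ a :: nil) ++ c :: t) by (rewrite Ezs, <- app_assoc; reflexivity).
    destruct (sorted_locations_split _ c t Ezs') as [_ [Ht' _]]. specialize (Ht' _ Hw). lra.
Qed.

Lemma rgap_sorted_locations pre a t : zs = pre ++ a :: t -> rgap x n a = next_gap kap a t.
Proof.
  intros Ezs. destruct (sorted_locations_split pre a t Ezs) as [_ [Ht _]].
  assert (Ha : on_circle a) by (apply location_on_circle, (In_split_app pre a t); auto).
  pose proof (kap_range a Ha). pose proof z0_on_circle as Hz.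
  apply Rle_antisym.
  - destruct t as [|c t]; simpl.
    + destruct (Req_dec a z0) as [->|Haz].
      * unfold kap, rgap. rewrite ccw_refl. pose proof (gap_r_le2 x n n z0). lra.
      * destruct Hz0 as [k0 [Hk0 Ek0]]. unfold kap, rgap.
        rewrite <- (ccw_sym z0 a), <- Ek0 by auto. apply gap_r_le; [auto|lia|congruence].
    + assert (Hc : In c zs) by (apply (In_split_app pre a (c :: t)); simpl; auto).
      pose proof (Ht c (or_introl eq_refl)).
      destruct (proj1 (proj2 sorted_locations_spec c) Hc) as [k [Hk <-]].
      rewrite <- ccw_kap by (auto; lra). apply gap_r_le; [auto|lia|intros E; rewrite E in *; lra].
  - pose proof (next_gap_le pre a t Ezs).
    apply gap_r_ge; [|lra]. intros k Hk _ Hne. apply (next_gap_le_ccw pre); auto.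
Qed.

Lemma lgap_sorted_locations pre a c t : zs = pre ++ a :: c :: t -> lgap x n c = kap c - kap a.
Proof.
  intros Ezs. destruct (sorted_locations_split pre a (c :: t) Ezs) as [_ [Ht _]].
  assert (Ezs' : zs = (pre ++ a :: nil) ++ c :: t) by (rewrite Ezs, <- app_assoc; reflexivity).
  destruct (sorted_locations_split _ c t Ezs') as [Hpre' [Ht' Hall']].
  assert (Ha : In a zs) by (apply (In_split_app pre a (c :: t)); auto).
  assert (Hc : on_circle c) by (apply location_on_circle, (In_split_app pre a (c :: t)); simpl; auto).
  pose proof (location_on_circle a Ha) as Hao.
  pose proof (kap_range a Hao). pose proof (kap_range c Hc). pose proof (Ht c (or_introl eq_refl)).
  apply Rle_antisym.
  - destruct (proj1 (proj2 sorted_locations_spec a) Ha) as [k [Hk <-]].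
    rewrite <- ccw_kap by (auto; lra). apply gap_l_le; [auto|lia|intros E; rewrite E in *; lra].
  - apply gap_l_ge; [|lra]. intros k Hk _ Hne. pose proof (Hv k Hk) as Hxk.
    pose proof (kap_range _ Hxk).
    destruct (Hall' k Hk) as [E|[Hw|Hw]]; [congruence| |].
    + assert (kap (x k) <= kap a).
      { apply in_app_or in Hw as [Hw|[<-|[]]]; [|lra].
        destruct (sorted_locations_split pre a (c :: t) Ezs) as [Hpre _]. apply Rlt_le, Hpre, Hw. }
      rewrite ccw_kap by (auto; lra). lra.
    + specialize (Ht' _ Hw). rewrite (ccw_kap_wrap (x k) c) by auto. lra.
Qed.

Lemma sorted_locations_last u : In u zs -> u <> z0 -> rgap x n u = ccw u z0 ->
  exists pre, zs = pre ++ u :: nil.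
Proof.
  intros Hu Huz Er. destruct (in_split u zs Hu) as [pre [[|c t] Ezs]]; [eauto|exfalso].
  pose proof (location_on_circle u Hu) as Huo.
  assert (Hc : on_circle c) by (apply location_on_circle, (In_split_app pre u (c :: t)); simpl; auto).
  rewrite (rgap_sorted_locations pre u (c :: t) Ezs), (ccw_sym z0 u) in Er
    by (auto; exact z0_on_circle).
  simpl in Er. fold kap in Er. pose proof (kap_range c Hc). lra.
Qed.

End SortedLocations.

Section Pairing.
Variables (M : R) (kap q : R -> R).

(* Along a chain of locations, [prev] is the gap before the head and [q a] the number of
   players at [a]; these are the equilibrium constraints of [NE_nplayers_max_gap]. *)
Fixpoint gap_chain (prev : R) (l : list R) : Prop :=
  match l with
  | nil => True
  | a :: t => q a * M <= prev + next_gap kap a t /\ next_gap kap a t <= M /\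
              (q a = 1 \/ q a = 2) /\ gap_chain (next_gap kap a t) t
  end.

Fixpoint sum_next_gaps (l : list R) : R :=
  match l with nil => 0 | a :: t => next_gap kap a t + sum_next_gaps t end.

Fixpoint last_gap (prev : R) (l : list R) : R :=
  match l with nil => prev | a :: t => last_gap (next_gap kap a t) t end.

Lemma sum_next_gaps_cons a t : sum_next_gaps (a :: t) = 2 * PI - kap a.
Proof. revert a; induction t as [|c t IH]; intros a; simpl in *; [lra|]. rewrite IH. lra. Qed.

Lemma last_gap_snoc prev pre a : last_gap prev (pre ++ a :: nil) = next_gap kap a nil.
Proof. revert prev; induction pre as [|b pre IH]; intros prev; simpl; auto. Qed.

(* Greedy pairing: [K] counts the players already paid for in pairs by a full [M] of the gaps
   seen so far ([Sm]); [o] records one unpaired player, which can still be paired using the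
   last gap [prev] as half of its [M]. *)
Lemma gap_chain_pairing l : forall Sm K (o : bool) prev, gap_chain prev l -> prev <= M -> 0 <= M ->
  M * INR K + (if o then prev else 0) <= Sm ->
  exists K' (o' : bool), M * INR K' + (if o' then last_gap prev l else 0) <= Sm + sum_next_gaps l /\
     2 * INR K' + ind o' = 2 * INR K + ind o + lsum q l.
Proof.
  induction l as [|a t IH]; intros Sm K o prev Hw Hp HM HI; simpl in *.
  - exists K, o. split; lra.
  - destruct Hw as [H1 [H2 [[Q|Q] H4]]]; rewrite Q in *; set (b := next_gap kap a t) in *.
    + destruct o.
      * destruct (IH (Sm + b) (S K) false b H4 H2 HM) as [K' [o' [A B]]]; [rewrite S_INR; lra|].
        exists K', o'. split; [lra|]. rewrite B, S_INR; simpl; lra.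
      * destruct (IH (Sm + b) K true b H4 H2 HM) as [K' [o' [A B]]]; [lra|].
        exists K', o'. split; [lra|]. rewrite B; simpl; lra.
    + destruct (IH (Sm + b) (S K) o b H4 H2 HM) as [K' [o' [A B]]];
        [destruct o; rewrite S_INR; lra|].
      exists K', o'. split; [lra|]. rewrite B, S_INR. destruct o; simpl; lra.
Qed.

End Pairing.

Section OddEquilibrium.
Variable n : nat.
Variable x : profile.
Hypothesis HNE : is_NE n x.
Hypothesis Hn : (1 <= n)%nat.

Let Hv : valid n x := proj1 HNE.

Lemma NE_gap_chain z0 : (exists k, (k < n)%nat /\ x k = z0) ->
  forall t pre a, sort_ccw z0 (locations x n) = pre ++ a :: t ->
  gap_chain (max_gap x n) (ccw z0) (nplayers_at x n) (lgap x n a) (a :: t).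
Proof.
  intros Hz0 t. induction t as [|c t IH]; intros pre a Ezs.
  all: assert (Ha : In a (sort_ccw z0 (locations x n))) by (rewrite Ezs; apply in_or_app; simpl; auto).
  all: destruct (proj1 (proj2 (sorted_locations_spec x n Hv z0 Hz0) a) Ha) as [i [Hi <-]].
  all: pose proof (rgap_sorted_locations x n Hv z0 Hz0 pre (x i) _ Ezs) as Er.
  all: pose proof (NE_nplayers_max_gap n x HNE Hn i Hi).
  all: pose proof (rgap_le_max_gap x n i Hi).
  all: pose proof (NE_nplayers_1_or_2 n x HNE Hn i Hi).
  all: cbn [gap_chain]; rewrite <- Er; split; [lra|split; [auto|split; [auto|]]].
  - exact I.
  - rewrite Er. cbn [next_gap]. rewrite <- (lgap_sorted_locations x n Hv z0 Hz0 pre (x i) c t Ezs).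
    apply (IH (pre ++ x i :: nil)). rewrite Ezs, <- app_assoc. reflexivity.
Qed.

(* Pairing the players along the circle, starting right after a largest gap, uses every gap
   at most once; for odd [n] one player is left over and is paid for by that largest gap. *)
Lemma NE_max_gap_bound_odd : Nat.even n = false -> max_gap x n * (INR n + 1) <= 4 * PI.
Proof.
  intros Hodd. pose proof (max_gap_range x n Hv Hn) as HM. set (M := max_gap x n) in *.
  destruct (max_gap_attained x n Hv Hn) as [j [Hj EM]]. fold M in EM.
  destruct (gap_r_cases x n n (x j) Hv (Hv j Hj)) as [[kv [Hkv [_ [Hne Er]]]]|[Er _]].
  2:{ pose proof (NE_max_gap_bound n x HNE Hn). unfold rgap in EM. fold M in H. rewrite EM, Er in *.
      assert (n <= 2)%nat by (apply INR_le; simpl; nra).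
      assert (n = 1)%nat as -> by (destruct n as [|[|[|]]]; simpl in Hodd; try discriminate; lia).
      simpl. lra. }
  set (v := x kv) in *. set (zs := sort_ccw v (locations x n)).
  assert (Hz0 : exists k, (k < n)%nat /\ x k = v) by eauto.
  destruct (sorted_locations_spec x n Hv v Hz0) as [Hsorted Hin]. fold zs in Hsorted, Hin.
  destruct (sorted_locations_last x n Hv v Hz0 (x j)) as [pre Ezs]; auto;
    [apply Hin; eauto|]. fold zs in Ezs.
  assert (exists a t, zs = a :: t) as [a [t Eat]]
    by (rewrite Ezs; destruct pre; simpl; eauto).
  assert (Hchain := NE_gap_chain v Hz0 t nil a Eat). rewrite <- Eat in Hchain.
  destruct (gap_chain_pairing M (ccw v) (nplayers_at x n) zs 0 0 false (lgap x n a) Hchain)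
    as [K [o [Hsum Hcount]]].
  - assert (In a zs) as Ha by (rewrite Eat; simpl; auto).
    destruct (proj1 (Hin a) Ha) as [i [Hi <-]]. apply lgap_le_max_gap; auto.
  - lra.
  - simpl; lra.
  - rewrite Eat, sum_next_gaps_cons, <- Eat in Hsum.
    rewrite Ezs, last_gap_snoc in Hsum. cbn [next_gap] in Hsum.
    rewrite <- (ccw_sym v (x j)), <- Er in Hsum by (auto; apply Hv; auto).
    unfold rgap in EM. rewrite <- EM in Hsum.
    assert (lsum (nplayers_at x n) zs = INR n) as Hn'.
    { apply lsum_nplayers; [apply (sorted_ccw_NoDup v), Hsorted|intros k Hk; apply Hin; eauto]. }
    rewrite Hn' in Hcount.
    assert (0 <= ccw v a).
    { destruct (proj1 (Hin a) ltac:(rewrite Eat; simpl; auto)) as [i [Hi <-]].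
      apply ccw_range; apply Hv; auto. }
    destruct o; simpl in Hcount.
    + assert (INR n = 2 * INR K + 1) as -> by lra. lra.
    + exfalso. assert (INR n = INR (2 * K)) by (rewrite mult_INR; simpl; lra).
      apply INR_eq in H0. subst n. rewrite Nat.even_mul in Hodd. discriminate.
Qed.

End OddEquilibrium.

Lemma sumR_weighted_sq_ge n (w r l : nat -> R) : (forall j, (j < n)%nat -> 0 <= w j) ->
  0 < sumR n w ->
  sumR n (fun j => w j * (r j + l j)) * sumR n (fun j => w j * (r j + l j)) / (2 * sumR n w)
  <= sumR n (fun j => w j * (r j * r j + l j * l j)).
Proof.
  intros Hw HW. set (W := sumR n w) in *. set (S := sumR n (fun j => w j * (r j + l j))).
  set (mu := S / (2 * W)).
  assert (Hpos : 0 <= sumR n (fun j => w j * ((r j - mu) * (r j - mu) + (l j - mu) * (l j - mu)))).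
  { apply sumR_nonneg. intros j Hj. apply Rmult_le_pos; [auto|].
    pose proof (Rle_0_sqr (r j - mu)). pose proof (Rle_0_sqr (l j - mu)). unfold Rsqr in *. lra. }
  rewrite (sumR_ext n _ (fun j => (w j * (r j * r j + l j * l j) + (-2 * mu) * (w j * (r j + l j)))
                                  + (2 * mu * mu) * w j)) in Hpos by (intros; ring).
  rewrite !sumR_plus, !sumR_scal in Hpos. fold S W in Hpos.
  assert (-2 * mu * S + 2 * mu * mu * W = - (S * S / (2 * W))) by (unfold mu; field; lra).
  lra.
Qed.

Lemma social_cost_ge n x : valid n x -> (1 <= n)%nat -> PI * PI / INR n <= social_cost x n.
Proof.
  intros Hv Hn. rewrite social_cost_eq by auto. pose proof PI_RGT_0.
  set (w := fun j => ind (first_at x j)).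
  assert (HWn : sumR n w <= INR n).
  { rewrite <- (Rmult_1_r (INR n)), <- sumR_const. apply sumR_le. intros; apply ind_range. }
  assert (HW1 : 1 <= sumR n w).
  { replace 1 with (w 0%nat) by (unfold w; rewrite (proj2 (first_at_iff x 0)); auto; intros; lia).
    apply sumR_ge_term; [intros; apply ind_range|lia]. }
  pose proof (sumR_weighted_sq_ge n w (fun j => rgap x n (x j)) (fun j => lgap x n (x j))
                ltac:(intros; apply ind_range) ltac:(lra)) as HCS.
  unfold w in HCS. rewrite sum_gaps in HCS by auto.
  rewrite (sumR_ext n _ (fun j => / 8 * (w j * (rgap x n (x j) * rgap x n (x j)
                                              + lgap x n (x j) * lgap x n (x j)))))
    by (intros; unfold w; lra).
  rewrite sumR_scal.
  apply Rle_trans with (/ 8 * ((4 * PI) * (4 * PI) / (2 * sumR n w)));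
    [|apply Rmult_le_compat_l; [lra|exact HCS]].
  replace (/ 8 * (4 * PI * (4 * PI) / (2 * sumR n w))) with (PI * PI / sumR n w) by (field; lra).
  apply Rmult_le_compat_l; [nra|]. apply Rinv_le_contravar; lra.
Qed.

Definition grid (m : nat) (f : nat -> nat) : profile := fun j => INR (f j) * (2 * PI / INR m).

Section Grid.
Variables (n m : nat) (f : nat -> nat).
Hypothesis Hn : (1 <= n)%nat.
Hypothesis Hm : (1 <= m)%nat.
Hypothesis Hf : forall j, (j < n)%nat -> (f j < m)%nat.
Hypothesis Hsurj : forall b, (b < m)%nat -> exists j, (j < n)%nat /\ f j = b.

Let s := 2 * PI / INR m.
Let cx := grid m f.

Lemma step_pos : 0 < s.
Proof. apply Rdiv_lt_0_compat; [pose proof PI_RGT_0; lra|apply lt_0_INR; lia]. Qed.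

Lemma m_step : INR m * s = 2 * PI.
Proof. unfold s. assert (0 < INR m) by (apply lt_0_INR; lia). field; lra. Qed.

Lemma step_le_2PI : s <= 2 * PI.
Proof.
  pose proof step_pos. pose proof m_step.
  assert (1 <= INR m) by (rewrite <- INR_1; apply le_INR; lia). nra.
Qed.

Lemma step_one_point : m = 1%nat -> s = 2 * PI.
Proof. intros Em. unfold s. rewrite Em. simpl. field. Qed.

Lemma grid_point_on_circle a : (a < m)%nat -> on_circle (INR a * s).
Proof.
  intros Ha. pose proof step_pos. pose proof m_step. pose proof (pos_INR a).
  assert (INR a + 1 <= INR m) by (rewrite <- S_INR; apply le_INR; lia).
  unfold on_circle; split; nra.
Qed.

Lemma grid_valid : valid n cx.
Proof. intros j Hj. apply grid_point_on_circle; auto. Qed.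

Lemma grid_eq j k : cx j = cx k <-> f j = f k.
Proof.
  unfold cx, grid. fold s. split; intros E; [|rewrite E; auto].
  pose proof step_pos. apply INR_eq, (Rmult_eq_reg_r s); auto; lra.
Qed.

Lemma ccw_grid_ge a b : (a < m)%nat -> (b < m)%nat -> a <> b -> s <= ccw (INR a * s) (INR b * s).
Proof.
  intros Ha Hb Hab. pose proof step_pos. pose proof m_step. unfold ccw. destruct Rle_dec as [H1|H1].
  - assert (b > a)%nat.
    { destruct (Nat.lt_total a b) as [|[|]]; auto; [lia|].
      exfalso. assert (INR b < INR a) by (apply lt_INR; lia). nra. }
    assert (1 <= INR b - INR a) by (rewrite <- minus_INR, <- INR_1 by lia; apply le_INR; lia). nra.
  - assert (INR a + 1 <= INR m) by (rewrite <- S_INR; apply le_INR; lia).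
    assert (0 <= (INR m - INR a - 1) * s) by (apply Rmult_le_pos; lra).
    assert (0 <= INR b * s) by (apply Rmult_le_pos; [apply pos_INR|lra]).
    lra.
Qed.

Definition shift (a d : nat) : nat := if Compare_dec.lt_dec (a + d) m then (a + d)%nat else (a + d - m)%nat.

Lemma shift_lt a d : (a < m)%nat -> (d < m)%nat -> (shift a d < m)%nat.
Proof. unfold shift; destruct Compare_dec.lt_dec; lia. Qed.

Lemma shift_neq a d : (a < m)%nat -> (1 <= d < m)%nat -> shift a d <> a.
Proof. unfold shift; destruct Compare_dec.lt_dec; lia. Qed.

Lemma ccw_shift a d : (a < m)%nat -> (d < m)%nat ->
  ccw (INR a * s) (INR (shift a d) * s) = INR d * s.
Proof.
  intros Ha Hd. pose proof step_pos. pose proof m_step. unfold ccw, shift.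
  destruct Compare_dec.lt_dec; destruct Rle_dec as [H1|H1].
  - rewrite plus_INR. ring.
  - exfalso. apply H1, Rmult_le_compat_r; [lra|]. apply le_INR; lia.
  - exfalso. assert (Hle : INR a <= INR (a + d - m)) by (apply (Rmult_le_reg_r s); lra).
    apply INR_le in Hle. lia.
  - rewrite minus_INR, !plus_INR by lia. nra.
Qed.

Lemma grid_neighbour j d : (j < n)%nat -> (1 <= d < m)%nat ->
  exists k, (k < n)%nat /\ f k = shift (f j) d /\ cx k <> cx j /\ ccw (cx j) (cx k) = INR d * s.
Proof.
  intros Hj Hd. destruct (Hsurj (shift (f j) d)) as [k [Hk Ek]]; [apply shift_lt; auto; lia|].
  exists k. repeat split; auto.
  - rewrite grid_eq, Ek. apply shift_neq; auto.
  - unfold cx, grid. fold s. rewrite Ek. apply ccw_shift; auto; lia.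
Qed.

Lemma grid_rgap j : (j < n)%nat -> rgap cx n (cx j) = s.
Proof.
  intros Hj. apply Rle_antisym.
  - destruct (Nat.eq_dec m 1) as [E1|E1]; [rewrite step_one_point by auto; apply gap_r_le2|].
    destruct (grid_neighbour j 1 Hj ltac:(lia)) as [k [Hk [_ [Hne Eccw]]]].
    simpl in Eccw. rewrite Rmult_1_l in Eccw. rewrite <- Eccw. apply gap_r_le; auto; lia.
  - apply gap_r_ge; [|apply step_le_2PI]. intros k Hk _ Hne.
    apply ccw_grid_ge; auto. intros E. apply Hne, grid_eq; auto.
Qed.

Lemma grid_lgap j : (j < n)%nat -> lgap cx n (cx j) = s.
Proof.
  intros Hj. pose proof step_pos. pose proof m_step. apply Rle_antisym.
  - destruct (Nat.eq_dec m 1) as [E1|E1]; [rewrite step_one_point by auto; apply gap_l_le2|].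
    destruct (grid_neighbour j (m - 1) Hj ltac:(lia)) as [k [Hk [_ [Hne Eccw]]]].
    apply Rle_trans with (ccw (cx k) (cx j)); [apply gap_l_le; auto; lia|].
    rewrite (ccw_sym (cx j) (cx k)), Eccw, minus_INR by (auto using grid_valid; lia). simpl. lra.
  - apply gap_l_ge; [|apply step_le_2PI]. intros k Hk _ Hne.
    apply ccw_grid_ge; auto. intros E. apply Hne, grid_eq; auto.
Qed.

Lemma grid_social_cost : social_cost cx n = PI * PI / INR m.
Proof.
  pose proof step_pos. pose proof (sum_gaps cx n grid_valid Hn) as Hsum.
  rewrite social_cost_eq by (auto using grid_valid).
  rewrite (sumR_ext n _ (fun j => s / 8 * (ind (first_at cx j) * (rgap cx n (cx j) + lgap cx n (cx j)))))
    by (intros j Hj; rewrite grid_rgap, grid_lgap by auto; lra).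
  rewrite sumR_scal, Hsum. unfold s. assert (0 < INR m) by (apply lt_0_INR; lia). field. lra.
Qed.

Lemma grid_payoff i : (i < n)%nat -> payoff cx n i = s / nplayers_at cx n (cx i).
Proof.
  intros Hi. rewrite payoff_eq, grid_rgap, grid_lgap by (auto using grid_valid).
  unfold Rdiv. lra.
Qed.

Lemma grid_gap_r_except i k : (i < n)%nat -> (k < n)%nat -> k <> i ->
  gap_r cx n i (cx k) <= 2 * s.
Proof.
  intros Hi Hk Hki. pose proof step_pos.
  destruct (Compare_dec.le_dec m 2) as [Hm2|Hm2].
  - pose proof m_step. assert (INR m <= 2) by (replace 2 with (INR 2) by (simpl; lra); apply le_INR; auto).
    pose proof (gap_r_le2 cx n i (cx k)). nra.
  - destruct (grid_neighbour k 1 Hk ltac:(lia)) as [j1 [Hj1 [E1 [Hne1 C1]]]].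
    destruct (Nat.eq_dec j1 i) as [->|Hj1i].
    + destruct (grid_neighbour k 2 Hk ltac:(lia)) as [j2 [Hj2 [E2 [Hne2 C2]]]].
      assert (j2 <> i) by (intros ->; rewrite E1 in E2; unfold shift in E2;
                           repeat destruct Compare_dec.lt_dec; lia).
      apply Rle_trans with (ccw (cx k) (cx j2)); [apply gap_r_le; auto|].
      rewrite C2. simpl. lra.
    + apply Rle_trans with (ccw (cx k) (cx j1)); [apply gap_r_le; auto|].
      rewrite C1. simpl. lra.
Qed.

Lemma grid_gap_r_except_shared i i' k : (i < n)%nat -> (i' < n)%nat -> i' <> i -> f i' = f i ->
  (k < n)%nat -> k <> i -> gap_r cx n i (cx k) <= s.
Proof.
  intros Hi Hi' Hi'i Ei' Hk Hki.
  destruct (Nat.eq_dec m 1) as [E1|E1]; [rewrite step_one_point by auto; apply gap_r_le2|].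
  destruct (grid_neighbour k 1 Hk ltac:(lia)) as [j1 [Hj1 [E [Hne C]]]].
  simpl in C. rewrite Rmult_1_l in C. rewrite <- C.
  destruct (Nat.eq_dec j1 i) as [->|Hj1i].
  - replace (cx i) with (cx i') by (apply grid_eq; auto).
    apply gap_r_le; auto. rewrite grid_eq, Ei', <- grid_eq. auto.
  - apply gap_r_le; auto.
Qed.

(* Every deviation earns at most half of the largest gap between the other players. *)
Lemma grid_NE : (forall i, (i < n)%nat -> nplayers_at cx n (cx i) <= 2) -> is_NE n cx.
Proof.
  intros Hq2. split; [apply grid_valid|]. intros i Hi p Hp.
  pose proof step_pos. rewrite grid_payoff by auto.
  set (y := upd cx i p). assert (Hyv : valid n y) by (apply upd_valid; auto using grid_valid).
  destruct (Nat.eq_dec n 1) as [->|En].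
  - assert (m = 1%nat) as Em.
    { destruct (Hsurj 0%nat ltac:(lia)) as [j0 [Hj0 E0]].
      destruct (Hsurj (m - 1)%nat ltac:(lia)) as [j1 [Hj1 E1]].
      assert (j0 = 0%nat /\ j1 = 0%nat) as [-> ->] by lia. lia. }
    assert (i = 0%nat) as -> by lia.
    rewrite (nplayers_alone cx 1 0%nat), step_one_point by (auto; intros; lia).
    unfold Rdiv. rewrite Rinv_1, Rmult_1_r. apply payoff_le_2PI; auto.
  - assert (Hyk : forall k, k <> i -> y k = cx k)
      by (intros k Hk; unfold y, upd; rewrite (proj2 (Nat.eqb_neq k i)); auto).
    destruct (nplayers_le2_cases cx n (cx i) i Hi eq_refl (Hq2 i Hi)) as [Q|Q]; rewrite Q.
    + apply Rle_trans with (2 * s / 2); [|lra].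
      apply payoff_le_half_gap_bound; auto; [lia|]. intros k Hk Hki.
      unfold y. rewrite gap_r_upd. fold y. rewrite Hyk by auto. apply grid_gap_r_except; auto.
    + assert (exists i', (i' < n)%nat /\ i' <> i /\ f i' = f i) as [i' [Hi' [Hi'i Ei']]].
      { apply NNPP. intros Hno. assert (nplayers_at cx n (cx i) = 1) by
          (apply nplayers_alone; auto; intros k Hk Hki E; apply Hno; exists k; rewrite <- grid_eq; auto).
        lra. }
      apply Rle_trans with (s / 2); [|lra].
      apply payoff_le_half_gap_bound; auto; [lia|]. intros k Hk Hki.
      unfold y. rewrite gap_r_upd. fold y. rewrite Hyk by auto.
      apply (grid_gap_r_except_shared i i'); auto.
Qed.

End Grid.

Definition equispaced (n : nat) : profile := grid n (fun j => j).
Definition paired (n : nat) : profile := grid (Nat.div2 (n + 1)) Nat.div2.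

Lemma equispaced_spec n : (1 <= n)%nat ->
  is_NE n (equispaced n) /\ social_cost (equispaced n) n = PI * PI / INR n.
Proof.
  intros Hn. assert (Hsurj : forall b, (b < n)%nat -> exists j, (j < n)%nat /\ j = b) by eauto.
  split; [|apply grid_social_cost; auto].
  apply grid_NE; auto. intros i Hi.
  rewrite nplayers_alone; [lra|auto|]. intros k Hk Hki E.
  apply (grid_eq n n (fun j => j)) in E; auto.
Qed.

Lemma div2_succ_pos n : (1 <= n)%nat -> (1 <= Nat.div2 (n + 1))%nat.
Proof. intros. pose proof (Nat.div2_odd (n + 1)). destruct (Nat.odd (n + 1)); simpl in *; lia. Qed.

Lemma paired_nplayers n i : (1 <= n)%nat -> (i < n)%nat ->
  nplayers_at (paired n) n (paired n i) <= 2.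
Proof.
  intros Hn Hi. pose proof (div2_succ_pos n Hn) as Hm.
  set (a := Nat.div2 i). unfold nplayers_at.
  apply Rle_trans with (sumR n (fun j => ind (Nat.eqb j (2 * a)) + ind (Nat.eqb j (2 * a + 1)))).
  - apply sumR_le. intros j Hj.
    pose proof (ind_range (Nat.eqb j (2 * a))). pose proof (ind_range (Nat.eqb j (2 * a + 1))).
    destruct (Reqb _ _) eqn:E; [change (ind true) with 1|change (ind false) with 0; lra].
    apply Reqb_true, (grid_eq n _ Nat.div2 Hn Hm) in E. fold a in E.
    pose proof (Nat.div2_odd j) as Hj2. rewrite E in Hj2.
    destruct (Nat.odd j); simpl in Hj2;
      [assert (j = 2 * a + 1)%nat as -> by lia|assert (j = 2 * a)%nat as -> by lia];
      rewrite Nat.eqb_refl; change (ind true) with 1; lra.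
  - rewrite sumR_plus. pose proof (sumR_delta_le n (2 * a)). pose proof (sumR_delta_le n (2 * a + 1)).
    lra.
Qed.

Definition worst_NE_cost (n : nat) : R :=
  if Nat.even n then 2 * PI * PI / INR n else 2 * PI * PI / (INR n + 1).

Lemma paired_spec n : (1 <= n)%nat ->
  is_NE n (paired n) /\ social_cost (paired n) n = worst_NE_cost n.
Proof.
  intros Hn. pose proof (div2_succ_pos n Hn) as Hm.
  assert (Hf : forall j, (j < n)%nat -> (Nat.div2 j < Nat.div2 (n + 1))%nat).
  { intros j Hj. pose proof (Nat.div2_odd (n + 1)). pose proof (Nat.div2_odd j).
    destruct (Nat.odd (n + 1)), (Nat.odd j); simpl in *; lia. }
  assert (Hsurj : forall b, (b < Nat.div2 (n + 1))%nat -> exists j, (j < n)%nat /\ Nat.div2 j = b).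
  { intros b Hb. exists (2 * b)%nat. split; [|apply Nat.div2_double].
    pose proof (Nat.div2_odd (n + 1)). destruct (Nat.odd (n + 1)); simpl in *; lia. }
  split; [apply grid_NE; auto; intros; apply paired_nplayers; auto|].
  unfold paired. rewrite grid_social_cost by auto. unfold worst_NE_cost.
  destruct (Nat.even n) eqn:Ev.
  - apply Nat.even_spec in Ev as [k ->].
    replace (2 * k + 1)%nat with (S (2 * k)) by lia. rewrite Nat.div2_succ_double, mult_INR.
    simpl. assert (0 < INR k) by (apply lt_0_INR; lia). field; lra.
  - assert (Nat.odd n = true) as Od by (rewrite <- Nat.negb_even, Ev; auto).
    apply Nat.odd_spec in Od as [k ->].
    replace (2 * k + 1 + 1)%nat with (2 * S k)%nat by lia. rewrite Nat.div2_double.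
    rewrite plus_INR, mult_INR, S_INR. simpl. pose proof (pos_INR k). field; lra.
Qed.

Lemma NE_social_cost_le n x : is_NE n x -> (1 <= n)%nat -> social_cost x n <= worst_NE_cost n.
Proof.
  intros HNE Hn. pose proof (proj1 HNE) as Hv.
  assert (HnR : 0 < INR n) by (apply lt_0_INR; lia). pose proof PI_RGT_0.
  pose proof (social_cost_le_max_gap x n Hv Hn). pose proof (max_gap_range x n Hv Hn).
  set (M := max_gap x n) in *. unfold worst_NE_cost. destruct (Nat.even n) eqn:Ev.
  - pose proof (NE_max_gap_bound n x HNE Hn). fold M in H2.
    assert (M <= 4 * PI / INR n) by (apply (Rmult_le_reg_l (INR n)); [lra|]; field_simplify; lra).
    apply Rle_trans with (4 * PI / INR n * PI / 2); [unfold Rdiv in *; nra|].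
    apply Req_le; field; lra.
  - pose proof (NE_max_gap_bound_odd n x HNE Hn Ev). fold M in H2.
    assert (M <= 4 * PI / (INR n + 1))
      by (apply (Rmult_le_reg_l (INR n + 1)); [lra|]; field_simplify; lra).
    apply Rle_trans with (4 * PI / (INR n + 1) * PI / 2); [unfold Rdiv in *; nra|].
    apply Req_le; field; lra.
Qed.

Theorem mainTheorem17 (n : nat) (hn : (1 <= n)%nat) :
  exists opt worst best : R,
    is_glb (all_costs n) opt /\ 0 < opt /\
    is_lub (NE_costs n) worst /\
    is_glb (NE_costs n) best /\
    worst / opt = (if Nat.even n then 2 else 2 * INR n / (INR n + 1)) /\
    best / opt = 1.
Proof.
  pose proof PI_RGT_0. assert (HnR : 0 < INR n) by (apply lt_0_INR; lia).
  destruct (equispaced_spec n hn) as [Heq_NE Heq_cost].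
  destruct (paired_spec n hn) as [Hp_NE Hp_cost].
  exists (PI * PI / INR n), (worst_NE_cost n), (PI * PI / INR n).
  split; [|split; [|split; [|split; [|split]]]].
  - split.
    + intros c [x [Hx ->]]. apply social_cost_ge; auto.
    + intros b Hb. apply Hb. exists (equispaced n). split; auto. apply Heq_NE.
  - apply Rdiv_lt_0_compat; nra.
  - split.
    + intros c [x [Hx ->]]. apply NE_social_cost_le; auto.
    + intros b Hb. apply Hb. exists (paired n). auto.
  - split.
    + intros c [x [Hx ->]]. apply social_cost_ge; [apply Hx|auto].
    + intros b Hb. apply Hb. exists (equispaced n). auto.
  - unfold worst_NE_cost. destruct (Nat.even n); field; lra.
  - field. lra.
Qed.
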